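(* Let $M\in\mathbb{N}^*$, $\mathcal{L}_M=\{0,\dots,M\}$, $x_0\in\mathcal{L}_M$, $y_0\in\mathbb{N}$. Let $\lambda:\mathbb{R}_+\times\mathcal{L}_M\to\mathbb{R}_+$ be such that $t\mapsto\lambda(t,x)$ is càdlàg for every $x$, $\lambda(t,M)=0$ for all $t$, and $\lambda$ is bounded on $[0,T]\times\mathcal{L}_M$ for every $T>0$. Let $f:\mathbb{R}\to\mathbb{R}$ be continuous with $0<\underline{f}\le f\le\bar f<\infty$. Let $(\mu^k_{ij})_{i,j\ge0}$, $k\in\mathcal{L}_M$, satisfy $\mu^k_{ij}\ge0$ for $i\ne j$, $\mu^k_{ii}\le0$, $\sum_{j\ge0}\mu^k_{ij}=0$, and $\sup_i|\mu^k_{ii}|<\infty$ for each $k$. Then the equation $P'(t)=\Psi(t,(P(t))_+)$, $P(0)=P_0$, admits a unique solution on $\mathbb{R}_+$ (with values in the summable families), and this solution satisfies $P(t)\ge0$ componentwise and $|P(t)|=1$ for all $t\ge0$.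
   Context: Let $E$ be the set of real families $u=(u^i_j)_{0\le i\le M,\,j\ge0}$, $E_+$ the subset with all entries $\ge0$, $E_+^*$ the subset with all entries $>0$, and $|u|=\sum_{i=0}^M\sum_{j\ge0}|u^i_j|$. For $x\in E$, $(x)_+$ denotes the componentwise positive part. $P_0$ is given by $(P_0)^{x_0}_{y_0}=1$ and all other entries $0$. For $x\in E_+$ set $\varphi(x,i)=\frac{\sum_{l\ge0}f(l)x^i_l}{\sum_{l\ge0}x^i_l}$ and $$(\Psi(t,x))^i_j=\sum_{k\ge0}\mu^i_{kj}x^i_k+\mathbf{1}_{\{i\ge1\}}\frac{\lambda(t,i-1)}{\varphi(x,i-1)}f(j)x^{i-1}_j-\mathbf{1}_{\{i\le M-1\}}\frac{\lambda(t,i)}{\varphi(x,i)}f(j)x^i_j,$$ with the convention that $\frac{x^i_j}{\varphi(x,i)}=0$ when $x^i_l=0$ for all $l$ (continuous extension from $E_+^*$). *)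

From Stdlib Require Import Reals Lra Arith.
From Coquelicot Require Import Coquelicot.
Open Scope R_scope.

(* A rfamily u = (u^i_j)_{0<=i<=M, j>=0} is represented by u : nat -> nat -> R;
   only the entries with i <= M are meaningful. *)
Definition rfamily := nat -> nat -> R.

Definition summable (M : nat) (u : rfamily) : Prop :=
  forall i, (i <= M)%nat -> ex_series (fun j => Rabs (u i j)).

Definition l1norm (M : nat) (u : rfamily) : R :=
  sum_f_R0 (fun i => Series (fun j => Rabs (u i j))) M.

Definition pos (u : rfamily) : rfamily := fun i j => Rmax (u i j) 0.

Definition P0 (x0 y0 : nat) : rfamily :=
  fun i j => if (Nat.eqb i x0 && Nat.eqb j y0)%bool then 1 else 0.

Definition phi (f : R -> R) (x : rfamily) (i : nat) : R :=
  Series (fun l => f (INR l) * x i l) / Series (x i).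

(* x^i_j / phi(x,i), with the convention that it is 0 when the row x^i is
   identically zero (for x >= 0 summable: iff sum_l x^i_l = 0). *)
Definition frac (f : R -> R) (x : rfamily) (i j : nat) : R :=
  if Req_EM_T (Series (x i)) 0 then 0 else x i j / phi f x i.

Definition Psi (M : nat) (lam : R -> nat -> R) (f : R -> R)
  (mu : nat -> nat -> nat -> R) (t : R) (x : rfamily) : rfamily :=
  fun i j =>
    Series (fun k => mu i k j * x i k)
    + (if (1 <=? i)%nat then lam t (i - 1)%nat * f (INR j) * frac f x (i - 1)%nat j else 0)
    - (if (i <=? M - 1)%nat then lam t i * f (INR j) * frac f x i j else 0).

(* P is a solution on R_+ of P' = Psi(t,(P)_+), P(0) = P_0, with values in the
   summable families: P(t) summable, t |-> P(t) continuous for |.|, and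
   P(t) = P_0 + int_0^t Psi(s,(P(s))_+) ds (integral form, componentwise). *)
Definition is_solution (M x0 y0 : nat) (lam : R -> nat -> R) (f : R -> R)
  (mu : nat -> nat -> nat -> R) (P : R -> rfamily) : Prop :=
  (forall t, 0 <= t -> summable M (P t)) /\
  (forall t, 0 <= t ->
     filterlim (fun s => l1norm M (fun i j => P s i j - P t i j))
       (within (fun s => 0 <= s) (locally t)) (locally 0)) /\
  (forall t, 0 <= t -> forall i j, (i <= M)%nat ->
     is_RInt (fun s => Psi M lam f mu s (pos (P s)) i j) 0 t
             (P t i j - P0 x0 y0 i j)).

(* The right-hand side [x |-> Psi(t, x_+)] is Lipschitz for the l1 norm, uniformly for [t] in
   bounded intervals: the generator part because a row of [mu^k] has l1 norm at most twice its
   diagonal entry, the jump part because [x^i_j / phi(x,i) = x^i_j * S / F] with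
   [S = sum_l x^i_l] and [flo S <= F <= fup S].  As [lambda] is càdlàg and bounded,
   [s |-> Psi(s, y(s)_+)] is Riemann integrable along every l1-continuous path, so the Picard map
   acts on such paths.  A Gronwall estimate with weight [exp (2 L t)] makes the Picard iterates
   from [P_0] converge geometrically to a solution, and also gives uniqueness.  Positivity is a
   barrier argument: [Psi(t, x_+)^i_j >= 0] whenever [x^i_j <= 0].  For the mass, summing the
   equation over [i <= M] and [j <= J] makes the jump terms telescope, while the generator term
   tends to 0 as [J -> oo] because the rows of [mu^k] sum to zero; hence [|P(t)| = |P_0| = 1]. *)

From Pilot Require Import Defs.
From Stdlib Require Import Reals Lra Lia Classical.
From Coquelicot Require Import Coquelicot.
Open Scope R_scope.

Lemma Series_zero : Series (fun _ => 0) = 0.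
Proof.
  rewrite (Series_ext _ (fun n => 0 * 0)) by (intro; ring).
  rewrite Series_scal_l; ring.
Qed.

Lemma Series_nonneg (a : nat -> R) :
  (forall n, 0 <= a n) -> ex_series a -> 0 <= Series a.
Proof.
  intros Ha Hex. rewrite <- Series_zero.
  apply Series_le; auto. intro n; split; [lra | auto].
Qed.

Lemma is_lim_seq_partial_sums (a : nat -> R) :
  ex_series a -> is_lim_seq (sum_f_R0 a) (Series a).
Proof.
  intros Hex. apply is_lim_seq_Reals, is_series_Reals, Series_correct, Hex.
Qed.

Lemma partial_sum_le_Series (a : nat -> R) N :
  (forall n, 0 <= a n) -> ex_series a -> sum_f_R0 a N <= Series a.
Proof.
  intros Ha Hex. apply sum_incr; auto.
  apply is_lim_seq_Reals, is_lim_seq_partial_sums, Hex.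
Qed.

Lemma ex_series_bounded_partial_sums (a : nat -> R) (B : R) :
  (forall n, 0 <= a n) -> (forall N, sum_f_R0 a N <= B) ->
  ex_series a /\ Series a <= B.
Proof.
  intros Ha Hb.
  assert (Hg : Un_growing (sum_f_R0 a)) by (intro n; simpl; specialize (Ha (S n)); lra).
  assert (Hu : has_ub (sum_f_R0 a)) by (exists B; intros x [n ->]; apply Hb).
  destruct (growing_cv _ Hg Hu) as [l Hl].
  assert (Hs : is_series a l) by (apply is_series_Reals; exact Hl).
  split; [exists l; exact Hs |].
  rewrite (is_series_unique _ _ Hs).
  apply is_lim_seq_Reals in Hl.
  exact (is_lim_seq_le _ (fun _ => B) l B Hb Hl (is_lim_seq_const B)).
Qed.

Lemma sum_f_R0_le_bounded (a : nat -> R) N i :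
  (forall n, (n <= N)%nat -> 0 <= a n) -> (i <= N)%nat -> a i <= sum_f_R0 a N.
Proof.
  intros Ha Hi. induction N; simpl.
  - replace i with 0%nat by lia. lra.
  - assert (0 <= a (S N)) by (apply Ha; lia).
    destruct (Nat.eq_dec i (S N)) as [-> | Hne].
    + enough (0 <= sum_f_R0 a N) by lra.
      clear IHN Hi. induction N; simpl.
      * apply Ha; lia.
      * assert (0 <= a (S N)) by (apply Ha; lia).
        enough (0 <= sum_f_R0 a N) by lra. apply IHN; intros; apply Ha; lia.
    + enough (a i <= sum_f_R0 a N) by lra. apply IHN; [intros; apply Ha | ]; lia.
Qed.

Lemma sum_f_R0_le_of_le (a : nat -> R) N N' :
  (forall n, 0 <= a n) -> (N <= N')%nat -> sum_f_R0 a N <= sum_f_R0 a N'.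
Proof. intros Ha Hle. induction Hle; simpl; [lra | specialize (Ha (S m)); lra]. Qed.

Lemma sum_f_R0_swap (a : nat -> nat -> R) M J :
  sum_f_R0 (fun j => sum_f_R0 (fun i => a i j) M) J =
  sum_f_R0 (fun i => sum_f_R0 (fun j => a i j) J) M.
Proof. induction J; simpl; [reflexivity | rewrite IHJ, <- sum_plus; reflexivity]. Qed.

Lemma Series_sum_f_R0 (a : nat -> nat -> R) M :
  (forall i, (i <= M)%nat -> ex_series (a i)) ->
  ex_series (fun j => sum_f_R0 (fun i => a i j) M) /\
  Series (fun j => sum_f_R0 (fun i => a i j) M) = sum_f_R0 (fun i => Series (a i)) M.
Proof.
  intros Ha. induction M; simpl.
  - split; [apply Ha; lia | reflexivity].
  - destruct IHM as [Hex Heq]; [intros; apply Ha; lia |].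
    assert (HS : ex_series (a (S M))) by (apply Ha; lia).
    split; [exact (ex_series_plus _ _ Hex HS) |].
    rewrite Series_plus, Heq; auto.
Qed.

Lemma sum_f_R0_scal_r (a : nat -> R) c N :
  sum_f_R0 (fun j => a j * c) N = sum_f_R0 a N * c.
Proof. rewrite <- scal_sum; ring. Qed.

Lemma sum_f_R0_scal_l (a : nat -> R) c N :
  sum_f_R0 (fun j => c * a j) N = c * sum_f_R0 a N.
Proof. rewrite scal_sum; apply sum_eq; intros; ring. Qed.

(* Instances on [R] of Coquelicot lemmas whose normed module [apply] cannot infer. *)
Lemma ex_series_Rabs_le (a b : nat -> R) :
  (forall n, Rabs (a n) <= b n) -> ex_series b -> ex_series a.
Proof. exact (ex_series_le a b). Qed.

Lemma ex_series_scal_R (c : R) (a : nat -> R) : ex_series a -> ex_series (fun n => c * a n).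
Proof. exact (ex_series_scal_l c a). Qed.

Lemma uniform_bound_finite (g : nat -> nat -> R) M :
  (forall k, (k <= M)%nat -> exists B, forall i, g k i <= B) ->
  exists B, forall k i, (k <= M)%nat -> g k i <= B.
Proof.
  induction M; intros H.
  - destruct (H 0%nat (Nat.le_refl 0)) as [B HB]. exists B. intros k i Hk. replace k with 0%nat by lia. auto.
  - destruct IHM as [B1 HB1]; [intros; apply H; lia |].
    destruct (H (S M) (Nat.le_refl _)) as [B2 HB2]. exists (Rmax B1 B2). intros k i Hk.
    destruct (Nat.eq_dec k (S M)) as [-> | Hne].
    + eapply Rle_trans; [apply HB2 | apply Rmax_r].
    + eapply Rle_trans; [apply HB1; lia | apply Rmax_l].
Qed.

(* Plain [pos] is the projection of [posreal]. *)
Notation ppos := Defs.pos.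

Definition row_summable (u : nat -> R) := ex_series (fun j => Rabs (u j)).
Definition row_norm (u : nat -> R) := Series (fun j => Rabs (u j)).

Lemma row_summable_bounded (u : nat -> R) B :
  (forall J, sum_f_R0 (fun j => Rabs (u j)) J <= B) -> row_summable u /\ row_norm u <= B.
Proof. intros H. apply ex_series_bounded_partial_sums; auto. intros; apply Rabs_pos. Qed.

Lemma partial_sum_le_row_norm (u : nat -> R) J :
  row_summable u -> sum_f_R0 (fun j => Rabs (u j)) J <= row_norm u.
Proof. intros H. apply partial_sum_le_Series; auto. intros; apply Rabs_pos. Qed.

Lemma row_norm_nonneg u : row_summable u -> 0 <= row_norm u.
Proof. intros H. apply Series_nonneg; auto. intros; apply Rabs_pos. Qed.

Lemma Rabs_le_row_norm u j : row_summable u -> Rabs (u j) <= row_norm u.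
Proof.
  intros H. eapply Rle_trans; [| apply (partial_sum_le_row_norm u j H)].
  apply (sum_f_R0_le_bounded (fun j => Rabs (u j))); auto. intros; apply Rabs_pos.
Qed.

Lemma row_norm_ext u v : (forall j, u j = v j) -> row_norm u = row_norm v.
Proof. intros H. apply Series_ext. intro; now rewrite H. Qed.

Lemma row_summable_ext u v : (forall j, u j = v j) -> row_summable u -> row_summable v.
Proof. intros H. apply ex_series_ext. intro; now rewrite H. Qed.

Lemma row_summable_zero : row_summable (fun _ => 0).
Proof. apply (row_summable_bounded _ 0). intro J. rewrite sum_cte, Rabs_R0; lra. Qed.

Lemma row_norm_zero : row_norm (fun _ => 0) = 0.
Proof.
  unfold row_norm. rewrite (Series_ext _ (fun _ => 0)) by (intro; apply Rabs_R0).
  apply Series_zero.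
Qed.

Lemma row_summable_minus u v :
  row_summable u -> row_summable v -> row_summable (fun j => u j - v j).
Proof.
  intros Hu Hv. apply (ex_series_Rabs_le _ (fun j => Rabs (u j) + Rabs (v j))).
  - intro j. rewrite Rabs_Rabsolu. unfold Rminus.
    eapply Rle_trans; [apply Rabs_triang | rewrite Rabs_Ropp; lra].
  - exact (ex_series_plus _ _ Hu Hv).
Qed.

Section L1Norm.
Variable M : nat.

Lemma summable_bounded (u : rfamily) B :
  (forall J, sum_f_R0 (fun i => sum_f_R0 (fun j => Rabs (u i j)) J) M <= B) ->
  summable M u /\ l1norm M u <= B.
Proof.
  intros H.
  assert (Hs : summable M u).
  { intros i Hi. apply (row_summable_bounded (u i) B). intros J. eapply Rle_trans; [| apply (H J)].
    apply (sum_f_R0_le_bounded (fun i => sum_f_R0 (fun j => Rabs (u i j)) J)); auto.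
    intros; apply cond_pos_sum; intros; apply Rabs_pos. }
  split; auto. unfold l1norm.
  destruct (Series_sum_f_R0 (fun i j => Rabs (u i j)) M Hs) as [_ Heq]. rewrite <- Heq.
  apply ex_series_bounded_partial_sums.
  - intros; apply cond_pos_sum; intros; apply Rabs_pos.
  - intros N. rewrite sum_f_R0_swap. apply H.
Qed.

Lemma partial_sums_le_l1norm (u : rfamily) J : summable M u ->
  sum_f_R0 (fun i => sum_f_R0 (fun j => Rabs (u i j)) J) M <= l1norm M u.
Proof. intros H. apply sum_Rle. intros i Hi. apply partial_sum_le_row_norm, H; auto. Qed.

Lemma l1norm_nonneg u : summable M u -> 0 <= l1norm M u.
Proof.
  intros H. apply Rle_trans with (sum_f_R0 (fun _ => 0) M).
  - rewrite sum_cte; lra.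
  - apply sum_Rle. intros. apply row_norm_nonneg, H; auto.
Qed.

Lemma row_norm_le_l1norm u i : summable M u -> (i <= M)%nat -> row_norm (u i) <= l1norm M u.
Proof.
  intros H Hi. apply (sum_f_R0_le_bounded (fun i => row_norm (u i))); auto.
  intros; apply row_norm_nonneg, H; auto.
Qed.

Lemma Rabs_le_l1norm (u : rfamily) i j : summable M u -> (i <= M)%nat -> Rabs (u i j) <= l1norm M u.
Proof.
  intros Hu Hi. eapply Rle_trans; [apply Rabs_le_row_norm, Hu; auto |]. apply row_norm_le_l1norm; auto.
Qed.

Lemma l1norm_ext (u v : rfamily) :
  (forall i j, (i <= M)%nat -> u i j = v i j) -> l1norm M u = l1norm M v.
Proof. intros H. apply sum_eq. intros; apply row_norm_ext; intro; apply H; auto. Qed.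

Lemma summable_ext (u v : rfamily) :
  (forall i j, (i <= M)%nat -> u i j = v i j) -> summable M u -> summable M v.
Proof. intros H Hu i Hi. apply (row_summable_ext (u i)); [intro; apply H | apply Hu]; auto. Qed.

Lemma summable_zero : summable M (fun _ _ => 0).
Proof. intros i _. apply row_summable_zero. Qed.

Lemma l1norm_zero : l1norm M (fun _ _ => 0) = 0.
Proof. unfold l1norm. rewrite (sum_eq _ (fun _ => 0)), sum_cte; [ring |]. intros; apply row_norm_zero. Qed.

Lemma l1norm_diag (u : rfamily) : l1norm M (fun i j => u i j - u i j) = 0.
Proof. rewrite (l1norm_ext _ (fun _ _ => 0)) by (intros; ring). apply l1norm_zero. Qed.

Lemma summable_minus (u v : rfamily) :
  summable M u -> summable M v -> summable M (fun i j => u i j - v i j).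
Proof. intros Hu Hv i Hi. apply row_summable_minus; [apply Hu | apply Hv]; auto. Qed.

Lemma l1norm_triangle (u v : rfamily) : summable M u -> summable M v ->
  summable M (fun i j => u i j + v i j) /\
  l1norm M (fun i j => u i j + v i j) <= l1norm M u + l1norm M v.
Proof.
  intros Hu Hv. apply summable_bounded. intros J.
  eapply Rle_trans;
    [| apply Rplus_le_compat; [apply (partial_sums_le_l1norm u J Hu) | apply (partial_sums_le_l1norm v J Hv)]].
  rewrite <- sum_plus. apply sum_Rle; intros. rewrite <- sum_plus. apply sum_Rle; intros.
  apply Rabs_triang.
Qed.

Lemma l1norm_minus_sym (u v : rfamily) :
  l1norm M (fun i j => u i j - v i j) = l1norm M (fun i j => v i j - u i j).
Proof. apply sum_eq; intros; apply Series_ext; intro; apply Rabs_minus_sym. Qed.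

Lemma l1norm_dist_triangle (u v w : rfamily) : summable M u -> summable M v -> summable M w ->
  l1norm M (fun i j => u i j - w i j) <=
  l1norm M (fun i j => u i j - v i j) + l1norm M (fun i j => v i j - w i j).
Proof.
  intros Hu Hv Hw.
  destruct (l1norm_triangle (fun i j => u i j - v i j) (fun i j => v i j - w i j)) as [_ H];
    try apply summable_minus; auto.
  rewrite (l1norm_ext _ (fun i j => u i j - w i j)) in H by (intros; ring). exact H.
Qed.

Lemma l1norm_reverse_triangle (u v : rfamily) : summable M u -> summable M v ->
  Rabs (l1norm M u - l1norm M v) <= l1norm M (fun i j => u i j - v i j).
Proof.
  intros Hu Hv.
  assert (H1 := l1norm_dist_triangle u v (fun _ _ => 0) Hu Hv summable_zero).
  assert (H2 := l1norm_dist_triangle v u (fun _ _ => 0) Hv Hu summable_zero).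
  cbv beta in H1, H2.
  rewrite (l1norm_ext (fun i j => u i j - 0) u), (l1norm_ext (fun i j => v i j - 0) v) in H1, H2
    by (intros; ring).
  rewrite l1norm_minus_sym in H2. apply Rabs_le; lra.
Qed.

End L1Norm.

Lemma pos_nonneg (y : rfamily) i j : 0 <= ppos y i j.
Proof. apply Rmax_r. Qed.

Lemma pos_lipschitz (y z : rfamily) i j : Rabs (ppos y i j - ppos z i j) <= Rabs (y i j - z i j).
Proof. unfold Defs.pos, Rmax. repeat destruct Rle_dec; unfold Rabs; repeat destruct Rcase_abs; lra. Qed.

Lemma row_summable_pos (y : rfamily) i : row_summable (y i) -> row_summable (ppos y i).
Proof.
  intros H. apply (ex_series_Rabs_le _ (fun j => Rabs (y i j))); auto. intro j. rewrite Rabs_Rabsolu.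
  unfold Defs.pos, Rmax. destruct Rle_dec; unfold Rabs; repeat destruct Rcase_abs; lra.
Qed.

Lemma row_norm_pos_minus (y z : rfamily) i : row_summable (y i) -> row_summable (z i) ->
  row_summable (fun j => ppos y i j - ppos z i j) /\
  row_norm (fun j => ppos y i j - ppos z i j) <= row_norm (fun j => y i j - z i j).
Proof.
  intros Hy Hz. split; [apply row_summable_minus; apply row_summable_pos; auto |].
  apply Series_le; [intro; split; [apply Rabs_pos | apply pos_lipschitz] |].
  apply row_summable_minus; auto.
Qed.

Lemma ex_RInt_continuous_R (h : R -> R) a b : (forall s, continuous h s) -> ex_RInt h a b.
Proof. intros H. apply (ex_RInt_continuous (V := R_CompleteNormedModule)). intros; apply H. Qed.

Lemma RInt_minus_R (g h : R -> R) a b : ex_RInt g a b -> ex_RInt h a b ->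
  RInt (fun s => g s - h s) a b = RInt g a b - RInt h a b.
Proof. exact (RInt_minus g h a b). Qed.

Lemma ex_RInt_sum_f_R0 (F : nat -> R -> R) a b N :
  (forall n, (n <= N)%nat -> ex_RInt (F n) a b) ->
  ex_RInt (fun s => sum_f_R0 (fun n => F n s) N) a b /\
  RInt (fun s => sum_f_R0 (fun n => F n s) N) a b = sum_f_R0 (fun n => RInt (F n) a b) N.
Proof.
  intros H. induction N; simpl.
  - split; [apply H; lia | reflexivity].
  - destruct IHN as [H1 H2]; [intros; apply H; lia |].
    assert (H3 : ex_RInt (F (S N)) a b) by (apply H; lia).
    split; [exact (ex_RInt_plus _ _ a b H1 H3) |]. rewrite <- H2. exact (RInt_plus _ _ a b H1 H3).
Qed.

Lemma RInt_Chasles_minus (g : R -> R) a b c :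
  ex_RInt g a b -> ex_RInt g b c -> RInt g a c - RInt g a b = RInt g b c.
Proof. intros H1 H2. rewrite <- (RInt_Chasles g a b c H1 H2). simpl. unfold plus; simpl. ring. Qed.

Lemma l1norm_RInt_le M (F : R -> rfamily) (k : R -> R) a b : a <= b ->
  (forall i j, (i <= M)%nat -> ex_RInt (fun s => F s i j) a b) -> ex_RInt k a b ->
  (forall s, a <= s <= b -> summable M (F s) /\ l1norm M (F s) <= k s) ->
  summable M (fun i j => RInt (fun s => F s i j) a b) /\
  l1norm M (fun i j => RInt (fun s => F s i j) a b) <= RInt k a b.
Proof.
  intros Hab HF Hk HB. apply summable_bounded. intros J.
  assert (E : forall i, (i <= M)%nat ->
     ex_RInt (fun s => sum_f_R0 (fun j => Rabs (F s i j)) J) a b /\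
     RInt (fun s => sum_f_R0 (fun j => Rabs (F s i j)) J) a b =
     sum_f_R0 (fun j => RInt (fun s => Rabs (F s i j)) a b) J).
  { intros i Hi. apply (ex_RInt_sum_f_R0 (fun j s => Rabs (F s i j))).
    intros; apply ex_RInt_norm; auto. }
  destruct (ex_RInt_sum_f_R0 (fun i s => sum_f_R0 (fun j => Rabs (F s i j)) J) a b M) as [E1 E2];
    [intros; apply E; auto |].
  apply Rle_trans with
    (sum_f_R0 (fun i => RInt (fun s => sum_f_R0 (fun j => Rabs (F s i j)) J) a b) M).
  { apply sum_Rle. intros i Hi. rewrite (proj2 (E i Hi)). apply sum_Rle. intros j _.
    apply abs_RInt_le; auto. }
  rewrite <- E2. apply RInt_le; auto.
  intros s Hs. destruct (HB s) as [B1 B2]; [lra |].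
  eapply Rle_trans; [apply partial_sums_le_l1norm; auto | exact B2].
Qed.

Lemma RInt_exp_le L c t : 0 < L -> 0 <= c -> 0 <= t ->
  ex_RInt (fun s => L * (c * exp (2 * L * s))) 0 t /\
  RInt (fun s => L * (c * exp (2 * L * s))) 0 t <= c / 2 * exp (2 * L * t).
Proof.
  intros HL Hc Ht.
  assert (H : is_RInt (fun s => L * (c * exp (2 * L * s))) 0 t
                (minus (c / 2 * exp (2 * L * t)) (c / 2 * exp (2 * L * 0)))).
  { apply (is_RInt_derive (fun s => c / 2 * exp (2 * L * s))).
    - intros x _. auto_derive; [auto | field].
    - intros x _. apply (ex_derive_continuous (K := R_AbsRing) (V := R_NormedModule)).
      auto_derive. auto. }
  split; [eexists; exact H |].
  rewrite (is_RInt_unique _ _ _ _ H). unfold minus, plus, opp; simpl.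
  rewrite Rmult_0_r, exp_0. lra.
Qed.

Lemma exp_le_of_le x y : x <= y -> exp x <= exp y.
Proof. intros H. destruct (Rle_lt_or_eq_dec x y H) as [H' | ->]; [left; apply exp_increasing |]; lra. Qed.

Lemma pow_half_small c e : 0 <= c -> 0 < e -> exists N, c * (/2) ^ N < e.
Proof.
  intros Hc He. destruct (pow_lt_1_zero (/2)) with (y := e / (c + 1)) as [N HN].
  - rewrite Rabs_right; lra.
  - apply Rdiv_lt_0_compat; lra.
  - exists N. specialize (HN N (Nat.le_refl N)). rewrite Rabs_right in HN by (apply Rle_ge, pow_le; lra).
    assert (c * (/2) ^ N <= (c + 1) * (/2) ^ N) by (apply Rmult_le_compat_r; [apply pow_le |]; lra).
    assert ((c + 1) * (/2) ^ N < (c + 1) * (e / (c + 1))) by (apply Rmult_lt_compat_l; lra).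
    replace ((c + 1) * (e / (c + 1))) with e in * by (field; lra). lra.
Qed.

Lemma pow_half_vanish a b c : 0 <= c -> (forall n, a <= b + c * (/2) ^ n) -> a <= b.
Proof.
  intros Hc H. destruct (Rle_or_lt a b) as [Hle | Hlt]; auto.
  destruct (pow_half_small c (a - b)) as [N HN]; [auto | lra |]. specialize (H N). lra.
Qed.

(* Each integration against [L] gains a factor [1/2] in front of the weight [exp (2 L t)]. *)
Lemma iterated_gronwall (a : nat -> R -> R) T L K : 0 < L -> 0 <= K ->
  (forall n s, continuous (a n) s) ->
  (forall t, 0 <= t <= T -> a 0%nat t <= K) ->
  (forall n t, 0 <= t <= T -> a (S n) t <= RInt (fun s => L * a n s) 0 t) ->
  forall n t, 0 <= t <= T -> a n t <= K * (/2) ^ n * exp (2 * L * t).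
Proof.
  intros HL HK Hc H0 Hstep. induction n; intros t Ht.
  - simpl. assert (1 <= exp (2 * L * t)) by (rewrite <- exp_0; apply exp_le_of_le; nra).
    specialize (H0 t Ht). nra.
  - destruct (RInt_exp_le L (K * (/2) ^ n) t) as [Hex Hle]; try lra.
    { apply Rmult_le_pos; [| apply pow_le]; lra. }
    eapply Rle_trans; [apply Hstep; auto |].
    eapply Rle_trans; [apply RInt_le; try lra | eapply Rle_trans; [exact Hle | right; simpl; field]].
    + apply ex_RInt_continuous_R. intro s.
      apply (continuous_mult (K := R_AbsRing) (fun _ => L)); [apply continuous_const | apply Hc].
    + exact Hex.
    + intros s Hs. apply Rmult_le_compat_l; [lra | apply IHn; lra].
Qed.

Lemma iterated_gronwall_zero (a : R -> R) T L K : 0 < L -> 0 <= K ->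
  (forall s, continuous a s) -> (forall t, 0 <= t <= T -> a t <= K) ->
  (forall t, 0 <= t <= T -> a t <= RInt (fun s => L * a s) 0 t) ->
  forall t, 0 <= t <= T -> a t <= 0.
Proof.
  intros HL HK Hc H0 Hstep t Ht.
  apply (pow_half_vanish _ _ (K * exp (2 * L * t))); [apply Rmult_le_pos; [| left; apply exp_pos]; lra |].
  intro n. rewrite Rplus_0_l.
  apply Rle_trans with (K * (/2) ^ n * exp (2 * L * t)); [| right; ring].
  apply (iterated_gronwall (fun _ => a) T L K); auto.
Qed.

Definition l1_continuous M (y : R -> rfamily) t := forall e, 0 < e -> exists d, 0 < d /\
  forall s, Rabs (s - t) < d -> l1norm M (fun i j => y s i j - y t i j) < e.

Section L1Paths.
Variable M : nat.

Lemma continuous_of_l1_lipschitz (y : R -> rfamily) (g : R -> R) t K : 0 <= K ->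
  (forall s, Rabs (g s - g t) <= K * l1norm M (fun i j => y s i j - y t i j)) ->
  l1_continuous M y t -> continuous g t.
Proof.
  intros HK Hb Hc. apply continuity_pt_filterlim.
  intros eps Heps.
  destruct (Hc (eps / (K + 1))) as [d [Hd Hd']]; [apply Rdiv_lt_0_compat; lra |].
  exists d. split; auto. intros x [_ Hx]. simpl in *. unfold R_dist in *.
  eapply Rle_lt_trans; [apply Hb |].
  apply Rle_lt_trans with (K * (eps / (K + 1))); [apply Rmult_le_compat_l; auto; left; apply Hd'; auto |].
  apply Rlt_le_trans with ((K + 1) * (eps / (K + 1))); [apply Rmult_lt_compat_r; [apply Rdiv_lt_0_compat |]; lra |].
  right; field; lra.
Qed.

Lemma continuous_l1norm (y : R -> rfamily) t : (forall s, summable M (y s)) ->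
  l1_continuous M y t -> continuous (fun s => l1norm M (y s)) t.
Proof.
  intros Hs Hc. apply (continuous_of_l1_lipschitz y _ t 1); auto; [lra |].
  intro s. rewrite Rmult_1_l. apply l1norm_reverse_triangle; auto.
Qed.

Lemma l1_continuous_minus (y z : R -> rfamily) t :
  (forall s, summable M (y s)) -> (forall s, summable M (z s)) ->
  l1_continuous M y t -> l1_continuous M z t -> l1_continuous M (fun s i j => y s i j - z s i j) t.
Proof.
  intros Sy Sz Hy Hz e He.
  destruct (Hy (e/2)) as [d1 [Hd1 H1]]; [lra |]. destruct (Hz (e/2)) as [d2 [Hd2 H2]]; [lra |].
  exists (Rmin d1 d2). split; [apply Rmin_pos; auto |]. intros s Hs.
  assert (A1 : Rabs (s - t) < d1) by (eapply Rlt_le_trans; [exact Hs | apply Rmin_l]).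
  assert (A2 : Rabs (s - t) < d2) by (eapply Rlt_le_trans; [exact Hs | apply Rmin_r]).
  destruct (l1norm_triangle M (fun i j => y s i j - y t i j) (fun i j => z t i j - z s i j)) as [_ X];
    try apply summable_minus; auto.
  rewrite (l1norm_ext M _ (fun i j => (y s i j - z s i j) - (y t i j - z t i j))) in X by (intros; ring).
  rewrite (l1norm_minus_sym M (z t)) in X. specialize (H1 s A1). specialize (H2 s A2). lra.
Qed.

Lemma l1_continuous_bounded (y : R -> rfamily) T : 0 <= T ->
  (forall s, summable M (y s)) -> (forall s, l1_continuous M y s) ->
  exists K, 0 <= K /\ forall s, 0 <= s <= T -> l1norm M (y s) <= K.
Proof.
  intros HT Hs Hc.
  destruct (continuity_ab_maj (fun s => l1norm M (y s)) 0 T HT) as [m [Hm _]].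
  - intros; apply continuity_pt_filterlim, continuous_l1norm; auto.
  - exists (l1norm M (y m)). split; [apply l1norm_nonneg; auto | exact Hm].
Qed.

Lemma Rabs_Rmax0_le s t : Rabs (Rmax 0 s - Rmax 0 t) <= Rabs (s - t).
Proof. unfold Rmax. repeat destruct Rle_dec; unfold Rabs; repeat destruct Rcase_abs; lra. Qed.

Lemma l1_continuous_of_lipschitz (y : R -> rfamily) :
  (forall T, 0 < T -> exists K, 0 <= K /\ forall t t', 0 <= t <= T -> 0 <= t' <= T ->
     l1norm M (fun i j => y t i j - y t' i j) <= K * Rabs (t - t')) ->
  forall t, l1_continuous M (fun s => y (Rmax 0 s)) t.
Proof.
  intros HL t e He. assert (Ht0 : 0 <= Rabs t) by apply Rabs_pos.
  destruct (HL (Rabs t + 1)) as [K [HK HK']]; [lra |].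
  exists (Rmin 1 (e / (K + 1))). split; [apply Rmin_pos; [| apply Rdiv_lt_0_compat]; lra |].
  intros s Hs. assert (Hs1 : Rabs (s - t) < 1) by (eapply Rlt_le_trans; [exact Hs | apply Rmin_l]).
  assert (Hs2 : Rabs (s - t) < e / (K + 1)) by (eapply Rlt_le_trans; [exact Hs | apply Rmin_r]).
  assert (Hmax := Rabs_Rmax0_le s t).
  assert (Hst : s - t <= Rabs (s - t)) by apply RRle_abs. assert (t <= Rabs t) by apply RRle_abs.
  assert (B1 : 0 <= Rmax 0 s <= Rabs t + 1) by (split; [apply Rmax_l | unfold Rmax; destruct Rle_dec; lra]).
  assert (B2 : 0 <= Rmax 0 t <= Rabs t + 1) by (split; [apply Rmax_l | unfold Rmax; destruct Rle_dec; lra]).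
  eapply Rle_lt_trans; [apply HK'; auto |].
  apply Rle_lt_trans with (K * (e / (K + 1))); [apply Rmult_le_compat_l; lra |].
  apply Rlt_le_trans with ((K + 1) * (e / (K + 1))); [apply Rmult_lt_compat_r; [apply Rdiv_lt_0_compat |]; lra |].
  right; field; lra.
Qed.

End L1Paths.

(** * Integrability of a càdlàg function times a continuous one *)

Definition right_continuous_at (g : R -> R) s :=
  forall e, 0 < e -> exists d, 0 < d /\ forall u, s <= u < s + d -> Rabs (g u - g s) < e.

Definition left_limit_at (g : R -> R) s l :=
  forall e, 0 < e -> exists d, 0 < d /\ forall u, s - d < u < s -> Rabs (g u - l) < e.

Lemma ball_R (x y e : R) : ball x e y <-> Rabs (y - x) < e.
Proof. unfold ball; simpl. unfold AbsRing_ball, abs, minus, plus, opp; simpl. tauto. Qed.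

Lemma right_continuous_at_filterlim (g : R -> R) t :
  filterlim g (at_right t) (locally (g t)) -> right_continuous_at g t.
Proof.
  intros H e He. destruct (proj1 (filterlim_locally g (g t)) H (mkposreal e He)) as [d Hd].
  exists d. split; [apply cond_pos |]. intros u Hu.
  destruct (Req_dec u t) as [-> | Hne]; [rewrite Rminus_diag, Rabs_R0; auto |].
  apply ball_R, Hd; [apply ball_R; rewrite Rabs_right |]; lra.
Qed.

Lemma left_limit_at_filterlim (g : R -> R) t l :
  filterlim g (at_left t) (locally l) -> left_limit_at g t l.
Proof.
  intros H e He. destruct (proj1 (filterlim_locally g l) H (mkposreal e He)) as [d Hd].
  exists d. split; [apply cond_pos |]. intros u Hu.
  apply ball_R, Hd; [apply ball_R; rewrite Rabs_left; simpl in *; lra | lra].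
Qed.

Definition unif_approx (F : R -> R) a x e :=
  exists p : R -> R, ex_RInt p a x /\ forall u, a <= u <= x -> Rabs (F u - p u) <= e.

Lemma ex_RInt_uniform_limit (F : R -> R) a b : a <= b ->
  (forall e, 0 < e -> unif_approx F a b e) -> ex_RInt F a b.
Proof.
  intros Hab Happ.
  set (U := {p : R -> R | ex_RInt p a b}).
  set (Fl := fun P : U -> Prop => exists e, 0 < e /\
    forall p : U, (forall u, Rabs (F u - proj1_sig p u) <= e) -> P p).
  (* outside [a, b] the approximant is replaced by [F] itself, so closeness becomes global *)
  assert (Hgood : forall e, 0 < e -> exists p : U, forall u, Rabs (F u - proj1_sig p u) <= e).
  { intros e He. destruct (Happ e He) as [p [Hp Hp']].
    set (q := fun u => if Rle_dec a u then (if Rle_dec u b then p u else F u) else F u).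
    assert (Hq : ex_RInt q a b).
    { eapply ex_RInt_ext; [| exact Hp]. intros u Hu. rewrite Rmin_left, Rmax_right in Hu by lra.
      unfold q. destruct Rle_dec; [| lra]. destruct Rle_dec; [reflexivity | lra]. }
    exists (exist _ q Hq). intro u. simpl. unfold q.
    destruct Rle_dec; [destruct Rle_dec |]; [apply Hp'; lra | |]; rewrite Rminus_diag, Rabs_R0; lra. }
  assert (HF : ProperFilter Fl).
  { constructor.
    - intros P [e [He HP]]. destruct (Hgood e He) as [p Hp]. exists p. apply HP; auto.
    - constructor.
      + exists 1. split; [lra | intros; exact I].
      + intros P Q [e1 [He1 H1]] [e2 [He2 H2]]. exists (Rmin e1 e2). split; [apply Rmin_pos; auto |].
        intros p Hp. assert (Rmin e1 e2 <= e1) by apply Rmin_l. assert (Rmin e1 e2 <= e2) by apply Rmin_r.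
        split; [apply H1 | apply H2]; intro u; specialize (Hp u); lra.
      + intros P Q HPQ [e [He HP]]. exists e. split; auto. }
  destruct (filterlim_RInt (V := R_CompleteNormedModule) (fun p : U => proj1_sig p) a b Fl HF F
              (fun p => RInt (proj1_sig p) a b)) as [If [_ HI]].
  - intros p. apply RInt_correct. exact (proj2_sig p).
  - intros P [eps Heps]. exists (eps / 2). split; [destruct eps; simpl; lra |].
    intros p Hp. apply Heps. intro t. apply ball_R.
    specialize (Hp t). rewrite Rabs_minus_sym. destruct eps; simpl in *; lra.
  - exists If. exact HI.
Qed.

Lemma unif_approx_extend (F q : R -> R) a x c e : a <= x <= c ->
  unif_approx F a x e -> ex_RInt q x c -> (forall u, x < u <= c -> Rabs (F u - q u) <= e) ->
  unif_approx F a c e.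
Proof.
  intros Hx [p [Hp Hp']] Hq Hq'.
  exists (fun u => if Rle_dec u x then p u else q u). split.
  - apply ex_RInt_Chasles with x.
    + eapply ex_RInt_ext; [| exact Hp]. intros u Hu. rewrite Rmin_left, Rmax_right in Hu by lra.
      destruct Rle_dec; [reflexivity | lra].
    + eapply ex_RInt_ext; [| exact Hq]. intros u Hu. rewrite Rmin_left, Rmax_right in Hu by lra.
      destruct Rle_dec; [lra | reflexivity].
  - intros u Hu. destruct Rle_dec; [apply Hp' | apply Hq']; lra.
Qed.

Lemma continuous_locally_bounded (h : R -> R) c : continuous h c ->
  exists d, 0 < d /\ forall u, Rabs (u - c) < d -> Rabs (h u) <= Rabs (h c) + 1.
Proof.
  intros H. apply continuity_pt_filterlim in H.
  destruct (H 1 Rlt_0_1) as [d [Hd Hd']]. exists d. split; auto. intros u Hu.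
  assert (Rabs (h u - h c) <= 1).
  { destruct (Req_dec u c) as [-> | Hne]; [rewrite Rminus_diag, Rabs_R0; lra |].
    left. apply (Hd' u). repeat split; auto. }
  assert (Rabs (h u) <= Rabs (h u - h c) + Rabs (h c)) by
    (replace (h u) with ((h u - h c) + h c) at 1 by ring; apply Rabs_triang).
  lra.
Qed.

Lemma Rabs_mult_small (x y e B : R) : 0 <= B -> Rabs x < e / (B + 1) -> Rabs y <= B + 1 ->
  Rabs (x * y) <= e.
Proof.
  intros HB Hx Hy. rewrite Rabs_mult.
  apply Rle_trans with (e / (B + 1) * (B + 1)); [apply Rmult_le_compat; try apply Rabs_pos; lra |].
  right; field; lra.
Qed.

Section CadlagTimesContinuous.
Variables (g h : R -> R) (a b e : R).
Hypothesis He : 0 < e.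
Hypothesis Hg_right : forall s, a <= s <= b -> right_continuous_at g s.
Hypothesis Hg_left : forall s, a < s <= b -> exists l, left_limit_at g s l.
Hypothesis Hh : forall s, continuous h s.

Let F := fun u => g u * h u.

Lemma unif_approx_up_to_sup c : a < c <= b ->
  (forall d, 0 < d -> exists x, c - d < x <= c /\ unif_approx F a x e /\ a <= x) ->
  unif_approx F a c e.
Proof.
  intros Hc Hsup.
  destruct (Hg_left c Hc) as [l Hl].
  assert (HB := Rabs_pos (h c)).
  destruct (Hl (e / (Rabs (h c) + 1))) as [d1 [Hd1 Hd1']]; [apply Rdiv_lt_0_compat; lra |].
  destruct (continuous_locally_bounded h c (Hh c)) as [d2 [Hd2 Hd2']].
  destruct (Hsup (Rmin d1 d2)) as [x [Hx [Ux Hax]]]; [apply Rmin_pos; auto |].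
  assert (Hd1x : Rmin d1 d2 <= d1) by apply Rmin_l. assert (Hd2x : Rmin d1 d2 <= d2) by apply Rmin_r.
  destruct (Req_dec x c) as [<- | Hxc]; [exact Ux |].
  apply (unif_approx_extend F (fun u => if Rlt_dec u c then l * h u else F c) a x c e); try lra; auto.
  - apply (ex_RInt_ext (fun u => l * h u)).
    + intros u Hu. rewrite Rmin_left, Rmax_right in Hu by lra. destruct Rlt_dec; [reflexivity | lra].
    + apply ex_RInt_continuous_R. intro s.
      apply (continuous_mult (K := R_AbsRing) (fun _ => l)); [apply continuous_const | apply Hh].
  - intros u Hu. destruct Rlt_dec as [Huc | Huc]; [| replace u with c by lra; rewrite Rminus_diag, Rabs_R0; lra].
    unfold F. replace (g u * h u - l * h u) with ((g u - l) * h u) by ring.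
    apply (Rabs_mult_small _ _ _ (Rabs (h c))); auto; [apply Hd1' | apply Hd2'; rewrite Rabs_left]; lra.
Qed.

Lemma unif_approx_past c : a <= c < b -> unif_approx F a c e ->
  exists x, c < x <= b /\ unif_approx F a x e.
Proof.
  intros Hc Uc. assert (HB := Rabs_pos (h c)).
  destruct (Hg_right c ltac:(lra) (e / (Rabs (h c) + 1))) as [d3 [Hd3 Hd3']]; [apply Rdiv_lt_0_compat; lra |].
  destruct (continuous_locally_bounded h c (Hh c)) as [d4 [Hd4 Hd4']].
  set (x := Rmin (c + Rmin d3 d4 / 2) b).
  assert (Hd34 : 0 < Rmin d3 d4) by (apply Rmin_pos; auto).
  assert (Hd3x : Rmin d3 d4 <= d3) by apply Rmin_l. assert (Hd4x : Rmin d3 d4 <= d4) by apply Rmin_r.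
  assert (Hx1 : c < x) by (unfold x; apply Rmin_glb_lt; lra).
  assert (Hx2 : x <= b) by apply Rmin_r.
  assert (Hx3 : x <= c + Rmin d3 d4 / 2) by apply Rmin_l.
  exists x. split; [lra |].
  apply (unif_approx_extend F (fun u => g c * h u) a c x e); try lra; auto.
  - apply ex_RInt_continuous_R. intro s.
    apply (continuous_mult (K := R_AbsRing) (fun _ => g c)); [apply continuous_const | apply Hh].
  - intros u Hu. unfold F. replace (g u * h u - g c * h u) with ((g u - g c) * h u) by ring.
    apply (Rabs_mult_small _ _ _ (Rabs (h c))); auto; [apply Hd3' | apply Hd4'; rewrite Rabs_right]; lra.
Qed.

Lemma unif_approx_cadlag_mult : a <= b -> unif_approx F a b e.
Proof.
  intros Hab.
  set (E := fun x => a <= x <= b /\ unif_approx F a x e).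
  assert (Ea : E a).
  { split; [lra |]. exists F. split; [apply ex_RInt_point |].
    intros; rewrite Rminus_diag, Rabs_R0; lra. }
  destruct (completeness E (ex_intro _ b (fun x Ex => proj2 (proj1 Ex))) (ex_intro _ a Ea))
    as [c [Hub Hlub]].
  assert (Hac : a <= c) by (apply Hub; exact Ea).
  assert (Hcb : c <= b) by (apply Hlub; intros x [Hx _]; lra).
  assert (Uc : unif_approx F a c e).
  { destruct (Req_dec c a) as [-> | Hca]; [exact (proj2 Ea) |].
    apply unif_approx_up_to_sup; [lra |]. intros d Hd.
    destruct (classic (exists x, E x /\ c - d < x)) as [[x [Ex Hx]] | Hno].
    - exists x. destruct Ex as [Hx' Ux]. repeat split; auto; try lra. apply Hub; split; auto.
    - exfalso. assert (c <= c - d); [| lra].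
      apply Hlub. intros y Ey. destruct (Rle_or_lt y (c - d)); auto.
      exfalso; apply Hno; exists y; auto. }
  destruct (Req_dec c b) as [<- | Hcb']; [exact Uc |].
  destruct (unif_approx_past c) as [x [Hx Ux]]; [lra | exact Uc |].
  assert (x <= c) by (apply Hub; split; [lra | exact Ux]). lra.
Qed.

End CadlagTimesContinuous.

Lemma ex_RInt_cadlag_mult (g h : R -> R) a b : a <= b ->
  (forall s, a <= s <= b -> right_continuous_at g s) ->
  (forall s, a < s <= b -> exists l, left_limit_at g s l) ->
  (forall s, continuous h s) -> ex_RInt (fun s => g s * h s) a b.
Proof.
  intros Hab Hr Hl Hh. apply ex_RInt_uniform_limit; auto.
  intros e He. apply unif_approx_cadlag_mult; auto.
Qed.

(** * Rows of a conservative generator *)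

Definition conservative_generator (q : nat -> nat -> R) (B : R) :=
  (forall i j, i <> j -> 0 <= q i j) /\ (forall i, q i i <= 0) /\
  (forall i, is_series (q i) 0) /\ (forall i, Rabs (q i i) <= B).

Section GeneratorRows.
Variables (q : nat -> nat -> R) (B : R).
Hypothesis Hq : conservative_generator q B.
Let Hoff : (forall i j, i <> j -> 0 <= q i j) := proj1 Hq.
Let Hdiag : (forall i, q i i <= 0) := proj1 (proj2 Hq).
Let Hrow : (forall i, is_series (q i) 0) := proj1 (proj2 (proj2 Hq)).
Let HB : (forall i, Rabs (q i i) <= B) := proj2 (proj2 (proj2 Hq)).

Lemma gen_abs_partial_sum i J :
  sum_f_R0 (fun j => Rabs (q i j)) J =
  sum_f_R0 (q i) J - 2 * (if (i <=? J)%nat then q i i else 0).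
Proof.
  induction J; simpl.
  - destruct i; simpl.
    + rewrite Rabs_left1 by apply Hdiag. ring.
    + rewrite Rabs_right by (apply Rle_ge, Hoff; auto). ring.
  - rewrite IHJ. destruct (Nat.eq_dec i (S J)) as [-> | Hne].
    + rewrite (proj2 (Nat.leb_nle (S J) J)), Nat.leb_refl by lia.
      rewrite Rabs_left1 by apply Hdiag. ring.
    + rewrite Rabs_right by (apply Rle_ge, Hoff; auto).
      destruct (i <=? J)%nat eqn:E.
      * apply Nat.leb_le in E. rewrite (proj2 (Nat.leb_le i (S J))) by lia. ring.
      * apply Nat.leb_nle in E. rewrite (proj2 (Nat.leb_nle i (S J))) by lia. ring.
Qed.

(* Past the diagonal the partial sums only increase, towards the row sum 0. *)
Lemma gen_partial_sum_nonpos i J : (i <= J)%nat -> sum_f_R0 (q i) J <= 0.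
Proof.
  intros HiJ.
  assert (Hm : forall n, sum_f_R0 (q i) J <= sum_f_R0 (q i) (n + J)).
  { induction n; simpl; [lra |].
    replace (S n + J)%nat with (S (n + J)) by lia. simpl.
    assert (0 <= q i (S (n + J))) by (apply Hoff; lia). lra. }
  assert (Hl : is_lim_seq (sum_f_R0 (q i)) 0) by apply is_lim_seq_Reals, is_series_Reals, Hrow.
  exact (is_lim_seq_le (fun _ => sum_f_R0 (q i) J) (fun n => sum_f_R0 (q i) (n + J)) _ _
           Hm (is_lim_seq_const _) (proj1 (is_lim_seq_incr_n _ J _) Hl)).
Qed.

Lemma gen_abs_partial_sum_le i J : sum_f_R0 (fun j => Rabs (q i j)) J <= 2 * B.
Proof.
  assert (Hmain : forall J, (i <= J)%nat -> sum_f_R0 (fun j => Rabs (q i j)) J <= 2 * B).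
  { intros J' HJ. rewrite gen_abs_partial_sum, (proj2 (Nat.leb_le i J')) by auto.
    assert (H1 := gen_partial_sum_nonpos i J' HJ). assert (H2 := HB i).
    assert (H3 := Hdiag i). rewrite Rabs_left1 in H2 by auto. lra. }
  destruct (Compare_dec.le_lt_dec i J) as [HJ | HJ]; [now apply Hmain |].
  eapply Rle_trans; [| apply (Hmain i); lia].
  apply sum_f_R0_le_of_le; [intros; apply Rabs_pos | lia].
Qed.

Lemma Rabs_gen_le i j : Rabs (q i j) <= 2 * B.
Proof.
  eapply Rle_trans; [| apply (gen_abs_partial_sum_le i j)].
  apply (sum_f_R0_le_bounded (fun j => Rabs (q i j))); auto. intros; apply Rabs_pos.
Qed.

Lemma Rabs_gen_partial_sum_le i J : Rabs (sum_f_R0 (q i) J) <= 2 * B.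
Proof. eapply Rle_trans; [apply Rsum_abs | apply gen_abs_partial_sum_le]. Qed.

Lemma gen_bound_nonneg : 0 <= B.
Proof. assert (H := HB 0%nat). assert (H0 := Rabs_pos (q 0%nat 0%nat)). lra. Qed.

Definition row_gen (w : nat -> R) j := Series (fun k => q k j * w k).

Lemma ex_series_row_gen j (w : nat -> R) : row_summable w ->
  ex_series (fun k => Rabs (q k j * w k)).
Proof.
  intros Hw. apply (ex_series_Rabs_le _ (fun k => 2 * B * Rabs (w k))).
  - intro k. rewrite Rabs_Rabsolu, Rabs_mult. apply Rmult_le_compat_r; [apply Rabs_pos | apply Rabs_gen_le].
  - apply ex_series_scal_R, Hw.
Qed.

Lemma row_gen_bounded (w : nat -> R) : row_summable w ->
  row_summable (row_gen w) /\ row_norm (row_gen w) <= 2 * B * row_norm w.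
Proof.
  intros Hw. apply row_summable_bounded. intros J.
  apply Rle_trans with (sum_f_R0 (fun j => Series (fun k => Rabs (q k j * w k))) J).
  { apply sum_Rle. intros j _. apply Series_Rabs, ex_series_row_gen, Hw. }
  destruct (Series_sum_f_R0 (fun j k => Rabs (q k j * w k)) J) as [Hs Heq];
    [intros; apply ex_series_row_gen, Hw |].
  rewrite <- Heq. unfold row_norm. rewrite <- Series_scal_l.
  apply Series_le; [| apply ex_series_scal_R, Hw].
  intro k. split; [apply cond_pos_sum; intros; apply Rabs_pos |].
  apply Rle_trans with (sum_f_R0 (fun j => Rabs (q k j)) J * Rabs (w k)).
  - rewrite <- sum_f_R0_scal_r. apply sum_Rle; intros. rewrite Rabs_mult; lra.
  - apply Rmult_le_compat_r; [apply Rabs_pos | apply gen_abs_partial_sum_le].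
Qed.

Lemma row_gen_minus j (x y : nat -> R) : row_summable x -> row_summable y ->
  row_gen x j - row_gen y j = row_gen (fun k => x k - y k) j.
Proof.
  intros Hx Hy. unfold row_gen. rewrite <- Series_minus.
  - apply Series_ext; intro; ring.
  - apply ex_series_Rabs, ex_series_row_gen, Hx.
  - apply ex_series_Rabs, ex_series_row_gen, Hy.
Qed.

End GeneratorRows.

(** * The normalised rates [x^i_j / phi(x,i)] *)

Section Fractions.
Variables (f : R -> R) (flo fup : R).
Hypothesis Hflo : 0 < flo.
Hypothesis Hf : forall y, flo <= f y <= fup.

Lemma flo_le_fup : flo <= fup.
Proof. destruct (Hf 0); lra. Qed.

Lemma ratio_bounds S F : 0 <= S -> flo * S <= F -> F <= fup * S ->
  S / F * F = S /\ 0 <= S / F <= / flo.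
Proof.
  intros HS H1 H2. destruct (Req_dec S 0) as [-> | HS0].
  - assert (F = 0) by (assert (H := flo_le_fup); nra). subst. unfold Rdiv. rewrite Rmult_0_l.
    split; [ring | split; [lra | left; apply Rinv_0_lt_compat; lra]].
  - assert (HF : 0 < F) by nra.
    split; [field; lra |]. split; [apply Rdiv_le_0_compat; lra |].
    apply (Rmult_le_reg_r (F * flo)); [nra |].
    replace (S / F * (F * flo)) with (S * flo) by (field; lra).
    replace (/ flo * (F * flo)) with F by (field; lra). lra.
Qed.

Lemma ratio_lipschitz Sx Sy Fx Fy d :
  0 <= Sx -> 0 <= Sy -> flo * Sx <= Fx -> Fx <= fup * Sx -> flo * Sy <= Fy -> Fy <= fup * Sy ->
  Rabs (Sx - Sy) <= d -> Rabs (Fx - Fy) <= fup * d ->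
  Sy * Rabs (Sx / Fx - Sy / Fy) <= (/ flo + fup / (flo * flo)) * d.
Proof.
  intros H1 H2 H3 H4 H5 H6 H7 H8.
  destruct (ratio_bounds Sx Fx) as [Ex [Rx1 Rx2]]; auto.
  destruct (ratio_bounds Sy Fy) as [Ey [Ry1 Ry2]]; auto.
  set (rx := Sx / Fx) in *. set (ry := Sy / Fy) in *.
  assert (Hid : Sy * (rx - ry) = ry * (rx * (Fy - Fx) + (Sx - Sy))).
  { clearbody rx ry. rewrite <- Ex, <- Ey. ring. }
  assert (Hd : 0 <= d) by (assert (0 <= Rabs (Sx - Sy)) by apply Rabs_pos; lra).
  rewrite <- (Rabs_right Sy), <- Rabs_mult, Hid, Rabs_mult, (Rabs_right ry) by lra.
  assert (Ha : Rabs (rx * (Fy - Fx) + (Sx - Sy)) <= rx * (fup * d) + d).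
  { eapply Rle_trans; [apply Rabs_triang |]. rewrite Rabs_mult, (Rabs_right rx), Rabs_minus_sym by lra.
    apply Rplus_le_compat; auto. apply Rmult_le_compat_l; lra. }
  assert (Hfup : 0 <= fup) by (assert (H := flo_le_fup); lra).
  apply Rle_trans with (ry * (rx * (fup * d) + d)); [apply Rmult_le_compat_l; lra |].
  apply Rle_trans with (/ flo * (/ flo * (fup * d) + d)); [| right; field; lra].
  apply Rmult_le_compat; try lra; [apply Rplus_le_le_0_compat; try lra; apply Rmult_le_pos; nra |].
  apply Rplus_le_compat_r. apply Rmult_le_compat_r; nra.
Qed.

Lemma Rabs_f_le y : Rabs (f y) <= fup.
Proof. destruct (Hf y). rewrite Rabs_right; lra. Qed.

Lemma weighted_row_bounds (x : nat -> R) : (forall l, 0 <= x l) -> row_summable x ->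
  ex_series x /\ ex_series (fun l => f (INR l) * x l) /\ 0 <= Series x /\
  flo * Series x <= Series (fun l => f (INR l) * x l) /\
  Series (fun l => f (INR l) * x l) <= fup * Series x.
Proof.
  intros Hx Hs. assert (Hs' : ex_series x) by (apply ex_series_Rabs; exact Hs).
  assert (Hfx : ex_series (fun l => f (INR l) * x l)).
  { apply (ex_series_Rabs_le _ (fun l => fup * Rabs (x l))); [| apply ex_series_scal_R, Hs].
    intro l. rewrite Rabs_mult. apply Rmult_le_compat_r; [apply Rabs_pos | apply Rabs_f_le]. }
  repeat split; auto; [apply Series_nonneg; auto | |];
    rewrite <- Series_scal_l; apply Series_le; try (apply ex_series_scal_R); auto;
    intro n; destruct (Hf (INR n)); specialize (Hx n); split; nra.
Qed.

Lemma frac_eq (x : rfamily) i j : (forall l, 0 <= x i l) -> row_summable (x i) ->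
  frac f x i j = x i j * (Series (x i) / Series (fun l => f (INR l) * x i l)).
Proof.
  intros Hx Hs. destruct (weighted_row_bounds (x i) Hx Hs) as [_ [_ [H1 [H2 H3]]]].
  unfold frac, phi. destruct (Req_EM_T (Series (x i)) 0) as [E | E].
  - rewrite E. unfold Rdiv. ring.
  - assert (0 < Series (fun l => f (INR l) * x i l)) by nra. field. lra.
Qed.

Definition frac_const := 2 / flo + fup / (flo * flo).

Lemma fup_frac_const_nonneg : 0 <= fup * frac_const.
Proof.
  assert (H := flo_le_fup). unfold frac_const.
  apply Rmult_le_pos; [lra |]. apply Rplus_le_le_0_compat; apply Rdiv_le_0_compat; nra.
Qed.

Lemma Rabs_weighted_Series_minus (x y : nat -> R) : row_summable x -> row_summable y ->
  Rabs (Series (fun l => f (INR l) * x l) - Series (fun l => f (INR l) * y l))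
    <= fup * row_norm (fun j => x j - y j).
Proof.
  intros Hx Hy. assert (Hd := row_summable_minus x y Hx Hy).
  assert (Hb : forall j, Rabs (f (INR j) * x j - f (INR j) * y j) <= fup * Rabs (x j - y j)).
  { intro j. replace (f (INR j) * x j - f (INR j) * y j) with (f (INR j) * (x j - y j)) by ring.
    rewrite Rabs_mult. apply Rmult_le_compat_r; [apply Rabs_pos | apply Rabs_f_le]. }
  assert (Hex : ex_series (fun j => Rabs (f (INR j) * x j - f (INR j) * y j)))
    by (apply (ex_series_Rabs_le _ (fun j => fup * Rabs (x j - y j))); [intro; rewrite Rabs_Rabsolu |
                                                                     apply ex_series_scal_R]; auto).
  unfold row_norm. rewrite <- Series_minus, <- Series_scal_l.
  - eapply Rle_trans; [apply Series_Rabs, Hex |].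
    apply Series_le; [intro; split; [apply Rabs_pos | auto] | apply ex_series_scal_R, Hd].
  - apply (ex_series_Rabs_le _ (fun j => fup * Rabs (x j))); [| apply ex_series_scal_R, Hx].
    intro j. rewrite Rabs_mult. apply Rmult_le_compat_r; [apply Rabs_pos | apply Rabs_f_le].
  - apply (ex_series_Rabs_le _ (fun j => fup * Rabs (y j))); [| apply ex_series_scal_R, Hy].
    intro j. rewrite Rabs_mult. apply Rmult_le_compat_r; [apply Rabs_pos | apply Rabs_f_le].
Qed.

Lemma scaled_row_lipschitz (x y : nat -> R) :
  (forall l, 0 <= x l) -> (forall l, 0 <= y l) -> row_summable x -> row_summable y ->
  let rx := Series x / Series (fun l => f (INR l) * x l) in
  let ry := Series y / Series (fun l => f (INR l) * y l) in
  row_summable (fun j => f (INR j) * (x j * rx) - f (INR j) * (y j * ry)) /\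
  row_norm (fun j => f (INR j) * (x j * rx) - f (INR j) * (y j * ry))
    <= fup * frac_const * row_norm (fun j => x j - y j).
Proof.
  intros Hx Hy Hsx Hsy rx ry.
  destruct (weighted_row_bounds x Hx Hsx) as [Ex [EFx [Sx0 [Fx1 Fx2]]]].
  destruct (weighted_row_bounds y Hy Hsy) as [Ey [EFy [Sy0 [Fy1 Fy2]]]].
  destruct (ratio_bounds _ _ Sx0 Fx1 Fx2) as [_ [Rx1 Rx2]]. fold rx in Rx1, Rx2.
  assert (Hsd := row_summable_minus x y Hsx Hsy).
  set (d := row_norm (fun j => x j - y j)).
  assert (Hd0 : 0 <= d) by (apply row_norm_nonneg; auto).
  assert (HS : Rabs (Series x - Series y) <= d) by (rewrite <- Series_minus by auto; apply Series_Rabs, Hsd).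
  assert (HR := ratio_lipschitz _ _ _ _ d Sx0 Sy0 Fx1 Fx2 Fy1 Fy2 HS
                  (Rabs_weighted_Series_minus x y Hsx Hsy)).
  fold rx ry in HR.
  assert (Hfup : 0 <= fup) by (assert (H := flo_le_fup); lra).
  apply row_summable_bounded. intros J.
  apply Rle_trans with (sum_f_R0 (fun j => fup * (Rabs (x j - y j) * rx + y j * Rabs (rx - ry))) J).
  { apply sum_Rle. intros j _.
    replace (f (INR j) * (x j * rx) - f (INR j) * (y j * ry)) with
      (f (INR j) * ((x j - y j) * rx + y j * (rx - ry))) by ring.
    rewrite Rabs_mult. apply Rmult_le_compat; try apply Rabs_pos; [apply Rabs_f_le |].
    eapply Rle_trans; [apply Rabs_triang |].
    rewrite !Rabs_mult, (Rabs_right rx), (Rabs_right (y j)) by (specialize (Hy j); lra). lra. }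
  rewrite sum_f_R0_scal_l, Rmult_assoc. apply Rmult_le_compat_l; auto.
  rewrite sum_plus, !sum_f_R0_scal_r.
  assert (H1 : sum_f_R0 (fun j => Rabs (x j - y j)) J <= d) by (apply partial_sum_le_row_norm; auto).
  assert (H2 : sum_f_R0 y J <= Series y) by (apply partial_sum_le_Series; auto).
  assert (H3 : 0 <= sum_f_R0 (fun j => Rabs (x j - y j)) J) by (apply cond_pos_sum; intros; apply Rabs_pos).
  assert (H4 : 0 <= Rabs (rx - ry)) by apply Rabs_pos.
  assert (H5 : 0 <= sum_f_R0 y J) by (apply cond_pos_sum; auto).
  apply Rle_trans with (d * rx + Series y * Rabs (rx - ry)).
  - apply Rplus_le_compat; apply Rmult_le_compat_r; lra.
  - unfold frac_const.
    replace (2 / flo + fup / (flo * flo)) with (/ flo + (/ flo + fup / (flo * flo))) by (field; lra).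
    rewrite Rmult_plus_distr_r. apply Rplus_le_compat; [| exact HR].
    rewrite (Rmult_comm (/ flo) d). apply Rmult_le_compat_l; auto.
Qed.

Lemma frac_row_lipschitz (y z : rfamily) k : row_summable (y k) -> row_summable (z k) ->
  row_summable (fun j => f (INR j) * frac f (ppos y) k j - f (INR j) * frac f (ppos z) k j) /\
  row_norm (fun j => f (INR j) * frac f (ppos y) k j - f (INR j) * frac f (ppos z) k j)
    <= fup * frac_const * row_norm (fun j => y k j - z k j).
Proof.
  intros Hy Hz.
  assert (Py := row_summable_pos y k Hy). assert (Pz := row_summable_pos z k Hz).
  assert (E : forall j, f (INR j) * frac f (ppos y) k j - f (INR j) * frac f (ppos z) k j =
     f (INR j) * (ppos y k j * (Series (ppos y k) / Series (fun l => f (INR l) * ppos y k l))) -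
     f (INR j) * (ppos z k j * (Series (ppos z k) / Series (fun l => f (INR l) * ppos z k l)))).
  { intro j. rewrite !frac_eq; auto; intros; apply pos_nonneg. }
  destruct (scaled_row_lipschitz (ppos y k) (ppos z k)) as [H1 H2]; auto; try (intros; apply pos_nonneg).
  split; [eapply row_summable_ext; [| exact H1]; intro; now rewrite E |].
  rewrite (row_norm_ext _ _ E). eapply Rle_trans; [exact H2 |].
  apply Rmult_le_compat_l; [apply fup_frac_const_nonneg | apply row_norm_pos_minus; auto].
Qed.

End Fractions.

Lemma eventually_all_small (u : nat -> nat -> R) K e : 0 < e ->
  (forall k, (k <= K)%nat -> is_lim_seq (u k) 0) ->
  exists N, forall J k, (N <= J)%nat -> (k <= K)%nat -> Rabs (u k J) < e.
Proof.
  intros He Hl. induction K.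
  - destruct (proj1 (is_lim_seq_Reals _ _) (Hl 0%nat (Nat.le_refl 0)) e He) as [N HN].
    exists N. intros J k HJ Hk. replace k with 0%nat by lia.
    specialize (HN J HJ). unfold R_dist in HN. rewrite Rminus_0_r in HN. exact HN.
  - destruct IHK as [N1 HN1]; [intros; apply Hl; lia |].
    destruct (proj1 (is_lim_seq_Reals _ _) (Hl (S K) (Nat.le_refl _)) e He) as [N2 HN2].
    exists (Nat.max N1 N2). intros J k HJ Hk. destruct (Nat.eq_dec k (S K)) as [-> | Hne].
    + specialize (HN2 J ltac:(lia)). unfold R_dist in HN2. rewrite Rminus_0_r in HN2. exact HN2.
    + apply HN1; lia.
Qed.

Lemma is_lim_seq_sum_f_R0_0 (a : nat -> nat -> R) N :
  (forall i, (i <= N)%nat -> is_lim_seq (a i) 0) -> is_lim_seq (fun J => sum_f_R0 (fun i => a i J) N) 0.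
Proof.
  intros H. induction N; simpl; [apply H; lia |].
  replace 0 with (0 + 0) by ring. apply is_lim_seq_plus'; [apply IHN; intros |]; apply H; lia.
Qed.

(* Dominated convergence for series: split into a finite head, where [c J] is uniformly small, and
   a tail where [x] is. *)
Lemma is_lim_seq_Series_dominated (x : nat -> R) (c : nat -> nat -> R) B :
  row_summable x -> 0 <= B -> (forall J k, Rabs (c J k) <= B) ->
  (forall k, is_lim_seq (fun J => c J k) 0) -> is_lim_seq (fun J => Series (fun k => x k * c J k)) 0.
Proof.
  intros Hx HB Hc Hl. apply is_lim_seq_Reals. intros e He.
  set (eta := e / 2). assert (Heta : 0 < eta) by (unfold eta; lra).
  assert (Hn0 : 0 <= row_norm x) by (apply row_norm_nonneg; auto).
  assert (Ht := is_lim_seq_partial_sums _ Hx). apply is_lim_seq_Reals in Ht.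
  destruct (Ht (eta / (B + 1))) as [K HK]; [apply Rdiv_lt_0_compat; lra |].
  specialize (HK K (Nat.le_refl K)). unfold R_dist in HK.
  set (eta' := eta / (row_norm x + 1)).
  assert (Heta' : 0 < eta') by (unfold eta'; apply Rdiv_lt_0_compat; lra).
  destruct (eventually_all_small (fun k J => c J k) K eta' Heta') as [N HN]; [intros; apply Hl |].
  exists N. intros J HJ. unfold R_dist. rewrite Rminus_0_r.
  assert (Exc : ex_series (fun k => Rabs (x k * c J k))).
  { apply (ex_series_Rabs_le _ (fun k => B * Rabs (x k))); [| apply ex_series_scal_R, Hx].
    intro k. rewrite Rabs_Rabsolu, Rabs_mult, Rmult_comm. apply Rmult_le_compat_r; auto; apply Rabs_pos. }
  assert (Htail : ex_series (fun k => Rabs (x (S K + k)%nat))) by apply (ex_series_incr_n (fun k => Rabs (x k)) (S K)), Hx.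
  eapply Rle_lt_trans; [apply Series_Rabs; auto |].
  rewrite (Series_incr_n _ (S K)) by (auto; lia). simpl pred.
  unfold row_norm in HK. rewrite (Series_incr_n (fun k => Rabs (x k)) (S K)) in HK by (auto; lia). simpl pred in HK.
  assert (T1 : sum_f_R0 (fun k => Rabs (x k * c J k)) K <= eta' * row_norm x).
  { apply Rle_trans with (sum_f_R0 (fun k => eta' * Rabs (x k)) K).
    - apply sum_Rle. intros k Hk. rewrite Rabs_mult, Rmult_comm.
      apply Rmult_le_compat_r; [apply Rabs_pos | left; apply (HN J k); auto].
    - rewrite sum_f_R0_scal_l. apply Rmult_le_compat_l; [lra | apply partial_sum_le_row_norm; auto]. }
  assert (T2 : Series (fun k => Rabs (x (S K + k)%nat * c J (S K + k)%nat))
               <= B * Series (fun k => Rabs (x (S K + k)%nat))).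
  { rewrite <- Series_scal_l. apply Series_le; [| apply ex_series_scal_R, Htail].
    intro k. split; [apply Rabs_pos |]. rewrite Rabs_mult, Rmult_comm.
    apply Rmult_le_compat_r; [apply Rabs_pos | auto]. }
  assert (T3 : 0 <= Series (fun k => Rabs (x (S K + k)%nat))) by (apply Series_nonneg; auto; intros; apply Rabs_pos).
  assert (T4 : Series (fun k => Rabs (x (S K + k)%nat)) < eta / (B + 1)).
  { assert (0 <= sum_f_R0 (fun k => Rabs (x k)) K) by (apply cond_pos_sum; intros; apply Rabs_pos).
    rewrite Rabs_left1 in HK by lra. lra. }
  assert (T5 : B * Series (fun k => Rabs (x (S K + k)%nat)) <= eta).
  { apply Rle_trans with ((B + 1) * (eta / (B + 1))); [apply Rmult_le_compat; lra | right; field; lra]. }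
  assert (T6 : eta' * row_norm x < eta).
  { unfold eta'. replace (eta / (row_norm x + 1) * row_norm x) with (eta - eta / (row_norm x + 1)) by (field; lra).
    assert (0 < eta / (row_norm x + 1)) by (apply Rdiv_lt_0_compat; lra). lra. }
  unfold eta in *. lra.
Qed.

Lemma grid_cover a d s n : 0 < d -> a <= s <= a + INR n * d ->
  exists m, (m <= n)%nat /\ a + INR m * d <= s <= a + INR m * d + d.
Proof.
  intros Hd. revert s. induction n; intros s Hs.
  - exists 0%nat. simpl in *. split; [lia | lra].
  - destruct (Rle_or_lt s (a + INR n * d)).
    + destruct (IHn s) as [m [Hm Hm']]; [lra |]. exists m. split; [lia | auto].
    + exists n. split; [lia |]. rewrite S_INR in Hs. lra.
Qed.

Lemma equilipschitz_unif_lim (th : nat -> R -> R) a b Lam : a <= b -> 0 <= Lam ->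
  (forall J s s', a <= s <= b -> a <= s' <= b -> Rabs (th J s - th J s') <= Lam * Rabs (s - s')) ->
  (forall s, a <= s <= b -> is_lim_seq (fun J => th J s) 0) ->
  forall e, 0 < e -> exists N, forall J, (N <= J)%nat -> forall s, a <= s <= b -> Rabs (th J s) <= e.
Proof.
  intros Hab HL Hlip Hlim e He.
  (* it suffices to control [th J] on a finite grid of mesh [d] *)
  set (d := e / (2 * (Lam + 1))).
  assert (Hd : 0 < d) by (unfold d; apply Rdiv_lt_0_compat; lra).
  destruct (nfloor_ex ((b - a) / d)) as [n [_ Hn]]; [apply Rdiv_le_0_compat; lra |].
  assert (Hcov : b <= a + INR (S n) * d).
  { rewrite S_INR. apply (Rmult_lt_compat_r d) in Hn; auto.
    unfold Rdiv in Hn. rewrite Rmult_assoc, Rinv_l in Hn by lra. lra. }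
  set (g := fun m => Rmin b (a + INR m * d)).
  assert (Hg : forall m, a <= g m <= b).
  { intro m. assert (0 <= INR m) by apply pos_INR. unfold g, Rmin. destruct Rle_dec; nra. }
  destruct (eventually_all_small (fun m J => th J (g m)) (S n) (e / 2)) as [N HN]; [lra | intros; apply Hlim, Hg |].
  exists N. intros J HJ s Hs.
  destruct (grid_cover a d s (S n) Hd) as [m [Hm Hm']]; [lra |].
  assert (Hgm : g m = a + INR m * d) by (unfold g; apply Rmin_right; lra).
  assert (A1 := HN J m HJ Hm).
  assert (A2 := Hlip J s (g m) Hs (Hg m)).
  assert (A3 : Lam * Rabs (s - g m) <= e / 2).
  { apply Rle_trans with ((Lam + 1) * d).
    - apply Rmult_le_compat; try lra; [apply Rabs_pos | rewrite Hgm, Rabs_right; lra].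
    - unfold d. right; field; lra. }
  assert (Rabs (th J s) <= Rabs (th J s - th J (g m)) + Rabs (th J (g m))).
  { replace (th J s) with ((th J s - th J (g m)) + th J (g m)) at 1 by ring. apply Rabs_triang. }
  lra.
Qed.

Lemma lim_within_nonneg_of_eps (h : R -> R) t :
  (forall e, 0 < e -> exists d, 0 < d /\ forall s, 0 <= s -> Rabs (s - t) < d -> Rabs (h s) < e) ->
  filterlim h (within (fun s => 0 <= s) (locally t)) (locally 0).
Proof.
  intros H. apply filterlim_locally. intro eps. destruct (H eps (cond_pos eps)) as [d [Hd Hd']].
  exists (mkposreal d Hd). intros y Hy Hy0. apply ball_R. rewrite Rminus_0_r.
  apply Hd'; [exact Hy0 | apply ball_R in Hy; exact Hy].
Qed.

Lemma eps_of_lim_within_nonneg (h : R -> R) t :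
  filterlim h (within (fun s => 0 <= s) (locally t)) (locally 0) ->
  forall e, 0 < e -> exists d, 0 < d /\ forall s, 0 <= s -> Rabs (s - t) < d -> Rabs (h s) < e.
Proof.
  intros H e He. destruct (proj1 (filterlim_locally h 0) H (mkposreal e He)) as [d Hd].
  exists d. split; [apply cond_pos |]. intros s Hs Hst.
  assert (X := Hd s (proj2 (ball_R t s d) Hst) Hs). apply ball_R in X. replace (h s) with (h s - 0) by ring. exact X.
Qed.

(* Barrier argument: at the last time [c] before [t] where [p >= 0], the increment of [p] over
   [c, t] is the integral of a nonnegative rate. *)
Lemma nonneg_of_inward_rate (p g : R -> R) t : 0 <= t -> 0 <= p 0 ->
  (forall s, 0 <= s <= t -> forall e, 0 < e ->
     exists d, 0 < d /\ forall u, 0 <= u -> Rabs (u - s) < d -> Rabs (p u - p s) < e) ->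
  (forall s, 0 <= s <= t -> ex_RInt g s t /\ p t - p s = RInt g s t) ->
  (forall s, 0 <= s <= t -> p s < 0 -> 0 <= g s) -> 0 <= p t.
Proof.
  intros Ht Hp0 Hc Hint Hg. destruct (Rle_or_lt 0 (p t)) as [| Hneg]; auto. exfalso.
  set (E := fun s => 0 <= s <= t /\ 0 <= p s).
  assert (E0 : E 0) by (split; [lra | auto]).
  destruct (completeness E (ex_intro _ t (fun x Ex => proj2 (proj1 Ex))) (ex_intro _ 0 E0)) as [c [Hub Hlub]].
  assert (Hc0 : 0 <= c) by (apply Hub; exact E0).
  assert (Hct : c <= t) by (apply Hlub; intros x [Hx _]; lra).
  assert (Hcpos : 0 <= p c).
  { destruct (Rle_or_lt 0 (p c)) as [| Hn]; auto. exfalso.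
    destruct (Hc c (conj Hc0 Hct) (- p c)) as [d [Hd Hd']]; [lra |].
    destruct (classic (exists x, E x /\ c - d < x)) as [[x [[Ex1 Ex2] Hx]] | Hno].
    - assert (x <= c) by (apply Hub; split; auto).
      assert (Rabs (p x - p c) < - p c) by (apply Hd'; [lra | rewrite Rabs_left1; lra]).
      revert H0. unfold Rabs. destruct Rcase_abs; lra.
    - assert (c <= c - d); [| lra].
      apply Hlub. intros y Ey. destruct (Rle_or_lt y (c - d)); auto. exfalso; apply Hno; exists y; auto. }
  assert (Hneg' : forall s, c < s <= t -> p s < 0).
  { intros s Hs. destruct (Rle_or_lt 0 (p s)) as [H | H]; auto.
    assert (s <= c) by (apply Hub; split; [lra | auto]). lra. }
  assert (Hct' : c < t) by (destruct (Req_dec c t) as [-> | ]; lra).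
  destruct (Hint c (conj Hc0 Hct)) as [Hex Heq].
  assert (0 <= RInt g c t) by (apply RInt_ge_0; [lra | exact Hex | intros s Hs; apply Hg; [lra | apply Hneg'; lra]]).
  lra.
Qed.

(** * Lipschitz estimates for [Psi(t, (x)_+)] *)

Section Solution.
Variables (M x0 y0 : nat) (lam : R -> nat -> R) (f : R -> R) (mu : nat -> nat -> nat -> R).
Variables (flo fup Bmu : R).
Hypothesis Hflo : 0 < flo.
Hypothesis Hf : forall y, flo <= f y <= fup.
Hypothesis Hmu : forall k, (k <= M)%nat -> conservative_generator (mu k) Bmu.

Definition Psi_plus s (y : rfamily) := Psi M lam f mu s (ppos y).
Definition in_rate s i := if (1 <=? i)%nat then lam s (i - 1)%nat else 0.
Definition out_rate s i := if (i <=? M - 1)%nat then lam s i else 0.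
Definition scaled_frac (y : rfamily) k j := f (INR j) * frac f (ppos y) k j.

Lemma Psi_plus_decomp s y i j : Psi_plus s y i j =
  row_gen (mu i) (ppos y i) j + in_rate s i * scaled_frac y (i - 1)%nat j - out_rate s i * scaled_frac y i j.
Proof. unfold Psi_plus, Psi, in_rate, out_rate, scaled_frac, row_gen. destruct (1 <=? i)%nat, (i <=? M - 1)%nat; ring. Qed.

Lemma Bmu_nonneg : 0 <= Bmu.
Proof. exact (gen_bound_nonneg (mu 0%nat) Bmu (Hmu 0%nat (Nat.le_0_l M))). Qed.

Definition Psi_lip_const Blam := 2 * Bmu + 2 * Blam * (fup * frac_const flo fup).

Lemma Psi_lip_const_nonneg Blam : 0 <= Blam -> 0 <= Psi_lip_const Blam.
Proof.
  intros HB. assert (H := Bmu_nonneg). assert (H' := fup_frac_const_nonneg f flo fup Hflo Hf).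
  unfold Psi_lip_const. nra.
Qed.

Section FixedTime.
Variables (s Blam : R).
Hypothesis HBlam : 0 <= Blam.
Hypothesis Hlam : forall x, (x <= M)%nat -> Rabs (lam s x) <= Blam.

Lemma Rabs_in_rate_le i : (i <= M)%nat -> Rabs (in_rate s i) <= Blam.
Proof. intros Hi. unfold in_rate. destruct (1 <=? i)%nat; [apply Hlam; lia | rewrite Rabs_R0; lra]. Qed.

Lemma Rabs_out_rate_le i : (i <= M)%nat -> Rabs (out_rate s i) <= Blam.
Proof. intros Hi. unfold out_rate. destruct (i <=? M - 1)%nat; [apply Hlam; lia | rewrite Rabs_R0; lra]. Qed.

Lemma Psi_plus_minus_le (y z : rfamily) i j : (i <= M)%nat ->
  row_summable (y i) -> row_summable (z i) ->
  Rabs (Psi_plus s y i j - Psi_plus s z i j) <=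
  Rabs (row_gen (mu i) (fun k => ppos y i k - ppos z i k) j)
  + Blam * Rabs (scaled_frac y (i - 1)%nat j - scaled_frac z (i - 1)%nat j)
  + Blam * Rabs (scaled_frac y i j - scaled_frac z i j).
Proof.
  intros Hi Hy Hz. rewrite !Psi_plus_decomp.
  rewrite <- (row_gen_minus (mu i) Bmu (Hmu i Hi)) by (apply row_summable_pos; auto).
  match goal with |- Rabs ?e <= _ => replace e with
    ((row_gen (mu i) (ppos y i) j - row_gen (mu i) (ppos z i) j)
     + in_rate s i * (scaled_frac y (i - 1)%nat j - scaled_frac z (i - 1)%nat j)
     - out_rate s i * (scaled_frac y i j - scaled_frac z i j)) by ring end.
  unfold Rminus at 1. eapply Rle_trans; [apply Rabs_triang |]. rewrite Rabs_Ropp.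
  apply Rplus_le_compat; [eapply Rle_trans; [apply Rabs_triang |]; apply Rplus_le_compat; [lra |] |];
    rewrite Rabs_mult; apply Rmult_le_compat_r; try apply Rabs_pos;
    [apply Rabs_in_rate_le | apply Rabs_out_rate_le]; auto.
Qed.

Lemma Psi_plus_row_lipschitz (y z : rfamily) i :
  summable M y -> summable M z -> (i <= M)%nat ->
  row_summable (fun j => Psi_plus s y i j - Psi_plus s z i j) /\
  row_norm (fun j => Psi_plus s y i j - Psi_plus s z i j)
    <= Psi_lip_const Blam * l1norm M (fun i j => y i j - z i j).
Proof.
  intros Hy Hz Hi.
  assert (Hyz := summable_minus M y z Hy Hz).
  set (D := l1norm M (fun i j => y i j - z i j)).
  destruct (row_norm_pos_minus y z i) as [Pd1 Pd2]; [apply Hy | apply Hz |]; auto.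
  destruct (row_gen_bounded (mu i) Bmu (Hmu i Hi) _ Pd1) as [A1 A2].
  destruct (frac_row_lipschitz f flo fup Hflo Hf y z (i - 1)%nat) as [F1 F1b]; [apply Hy | apply Hz |]; try lia.
  destruct (frac_row_lipschitz f flo fup Hflo Hf y z i) as [F2 F2b]; [apply Hy | apply Hz |]; try lia.
  assert (N1 : row_norm (fun j => y i j - z i j) <= D) by (apply (row_norm_le_l1norm M (fun i j => y i j - z i j)); auto).
  assert (N2 : row_norm (fun j => y (i - 1)%nat j - z (i - 1)%nat j) <= D)
    by (apply (row_norm_le_l1norm M (fun i j => y i j - z i j)); auto; lia).
  assert (Hfk := fup_frac_const_nonneg f flo fup Hflo Hf). assert (HBmu := Bmu_nonneg).
  apply row_summable_bounded. intros J.
  eapply Rle_trans.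
  { apply sum_growing. intro j. apply Psi_plus_minus_le; [auto | apply Hy | apply Hz]; auto. }
  rewrite !sum_plus, !sum_f_R0_scal_l.
  assert (S1 := partial_sum_le_row_norm _ J A1).
  assert (S2 := partial_sum_le_row_norm _ J F1). assert (S3 := partial_sum_le_row_norm _ J F2).
  unfold scaled_frac. unfold Psi_lip_const.
  apply Rle_trans with (2 * Bmu * D + Blam * (fup * frac_const flo fup * D) + Blam * (fup * frac_const flo fup * D));
    [| right; ring].
  repeat apply Rplus_le_compat.
  - eapply Rle_trans; [exact S1 |]. eapply Rle_trans; [exact A2 |]. apply Rmult_le_compat_l; lra.
  - apply Rmult_le_compat_l; auto. eapply Rle_trans; [exact S2 |]. eapply Rle_trans; [exact F1b |].
    apply Rmult_le_compat_l; auto.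
  - apply Rmult_le_compat_l; auto. eapply Rle_trans; [exact S3 |]. eapply Rle_trans; [exact F2b |].
    apply Rmult_le_compat_l; auto.
Qed.

Lemma Psi_plus_lipschitz (y z : rfamily) : summable M y -> summable M z ->
  summable M (fun i j => Psi_plus s y i j - Psi_plus s z i j) /\
  l1norm M (fun i j => Psi_plus s y i j - Psi_plus s z i j)
    <= INR (S M) * Psi_lip_const Blam * l1norm M (fun i j => y i j - z i j).
Proof.
  intros Hy Hz. apply summable_bounded. intros J.
  apply Rle_trans with (sum_f_R0 (fun _ => Psi_lip_const Blam * l1norm M (fun i j => y i j - z i j)) M).
  - apply sum_Rle. intros i Hi. destruct (Psi_plus_row_lipschitz y z i) as [H1 H2]; auto.
    eapply Rle_trans; [apply partial_sum_le_row_norm, H1 | exact H2].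
  - rewrite sum_cte. right; ring.
Qed.

End FixedTime.

Lemma Psi_plus_zero s i j : Psi_plus s (fun _ _ => 0) i j = 0.
Proof.
  assert (Hp : forall k l, ppos (fun _ _ => 0) k l = 0) by (intros; apply Rmax_left; lra).
  assert (Hfr : forall k l, frac f (ppos (fun _ _ => 0)) k l = 0).
  { intros k l. unfold frac. destruct Req_EM_T as [_ | E]; [reflexivity |].
    exfalso; apply E. rewrite (Series_ext _ (fun _ => 0)); [apply Series_zero | apply Hp]. }
  rewrite Psi_plus_decomp. unfold scaled_frac, row_gen. rewrite !Hfr.
  rewrite (Series_ext _ (fun _ => 0)), Series_zero; [ring | intro; rewrite Hp; ring].
Qed.

Lemma Psi_plus_bounded s Blam (y : rfamily) :
  0 <= Blam -> (forall x, (x <= M)%nat -> Rabs (lam s x) <= Blam) -> summable M y ->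
  summable M (Psi_plus s y) /\ l1norm M (Psi_plus s y) <= INR (S M) * Psi_lip_const Blam * l1norm M y.
Proof.
  intros HB Hlam Hy.
  destruct (Psi_plus_lipschitz s Blam HB Hlam y (fun _ _ => 0)) as [H1 H2]; auto; [apply summable_zero |].
  assert (E1 : forall i j, (i <= M)%nat -> Psi_plus s y i j - Psi_plus s (fun _ _ => 0) i j = Psi_plus s y i j)
    by (intros; rewrite Psi_plus_zero; ring).
  assert (E2 : forall i j, (i <= M)%nat -> y i j - 0 = y i j) by (intros; ring).
  split; [eapply summable_ext; [exact E1 | exact H1] |].
  rewrite <- (l1norm_ext M _ _ E1), <- (l1norm_ext M _ _ E2). exact H2.
Qed.

Hypothesis Hlam0 : forall t x, 0 <= t -> (x <= M)%nat -> 0 <= lam t x.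

(* A nonpositive entry is not pushed further down: its own outflow vanishes and all inflows are
   nonnegative. *)
Lemma Psi_plus_nonneg_at_nonpos s (y : rfamily) i j : 0 <= s -> summable M y -> (i <= M)%nat ->
  y i j <= 0 -> 0 <= Psi_plus s y i j.
Proof.
  intros Hs Hy Hi Hyij.
  assert (Hx : ppos y i j = 0) by (apply Rmax_right; auto).
  destruct (Hmu i Hi) as [Hoff _].
  assert (Hfr : scaled_frac y i j = 0).
  { unfold scaled_frac. rewrite (frac_eq f flo fup Hflo Hf), Hx; [ring | intros; apply pos_nonneg |].
    apply row_summable_pos, Hy; auto. }
  rewrite Psi_plus_decomp, Hfr, Rmult_0_r, Rminus_0_r.
  apply Rplus_le_le_0_compat.
  - apply Series_nonneg.
    + intro k. destruct (Nat.eq_dec k j) as [-> | Hne]; [rewrite Hx; lra |].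
      apply Rmult_le_pos; [apply Hoff; auto | apply pos_nonneg].
    + apply ex_series_Rabs, (ex_series_row_gen (mu i) Bmu (Hmu i Hi)), row_summable_pos, Hy; auto.
  - apply Rmult_le_pos; [unfold in_rate; destruct (1 <=? i)%nat; [apply Hlam0; auto; lia | lra] |].
    assert (Hrow : row_summable (ppos y (i - 1)%nat)) by (apply row_summable_pos, Hy; lia).
    destruct (weighted_row_bounds f flo fup Hflo Hf _ (fun l => pos_nonneg y (i - 1)%nat l) Hrow)
      as [_ [_ [A1 [A2 A3]]]].
    unfold scaled_frac. rewrite (frac_eq f flo fup Hflo Hf); [| intros; apply pos_nonneg | auto].
    apply Rmult_le_pos; [destruct (Hf (INR j)); lra |]. apply Rmult_le_pos; [apply pos_nonneg |].
    apply (ratio_bounds f flo fup Hflo Hf _ _ A1 A2 A3).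
Qed.

Hypothesis Hlam_right : forall x, (x <= M)%nat -> forall t, 0 <= t -> right_continuous_at (fun s => lam s x) t.
Hypothesis Hlam_left : forall x, (x <= M)%nat -> forall t, 0 < t -> exists l, left_limit_at (fun s => lam s x) t l.
Hypothesis Hlam_bounded : forall T, 0 < T -> exists B, forall t x, 0 <= t <= T -> (x <= M)%nat -> Rabs (lam t x) <= B.

Lemma row_gen_continuous (y : R -> rfamily) t i j : (forall s, summable M (y s)) ->
  l1_continuous M y t -> (i <= M)%nat -> continuous (fun s => row_gen (mu i) (ppos (y s) i) j) t.
Proof.
  intros Hs Hc Hi. apply (continuous_of_l1_lipschitz M y _ t (2 * Bmu)); auto; [assert (H := Bmu_nonneg); lra |].
  intro s. destruct (row_norm_pos_minus (y s) (y t) i) as [P1 P2]; [apply Hs | apply Hs |]; auto.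
  rewrite (row_gen_minus (mu i) Bmu (Hmu i Hi)) by (apply row_summable_pos, Hs; auto).
  destruct (row_gen_bounded (mu i) Bmu (Hmu i Hi) _ P1) as [A1 A2].
  eapply Rle_trans; [apply (Rabs_le_row_norm _ j A1) |]. eapply Rle_trans; [exact A2 |].
  apply Rmult_le_compat_l; [assert (H := Bmu_nonneg); lra |]. eapply Rle_trans; [exact P2 |].
  apply (row_norm_le_l1norm M (fun i j => y s i j - y t i j)); auto. apply summable_minus; auto.
Qed.

Lemma scaled_frac_continuous (y : R -> rfamily) t i j : (forall s, summable M (y s)) ->
  l1_continuous M y t -> (i <= M)%nat -> continuous (fun s => scaled_frac (y s) i j) t.
Proof.
  intros Hs Hc Hi. assert (Hfk := fup_frac_const_nonneg f flo fup Hflo Hf).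
  apply (continuous_of_l1_lipschitz M y _ t (fup * frac_const flo fup)); auto.
  intro s. destruct (frac_row_lipschitz f flo fup Hflo Hf (y s) (y t) i) as [F1 F2]; [apply Hs | apply Hs |]; auto.
  eapply Rle_trans; [apply (Rabs_le_row_norm _ j F1) |]. eapply Rle_trans; [exact F2 |].
  apply Rmult_le_compat_l; auto.
  apply (row_norm_le_l1norm M (fun i j => y s i j - y t i j)); auto. apply summable_minus; auto.
Qed.

Lemma ex_RInt_rate_mult (b : bool) x (h : R -> R) t : 0 <= t -> (b = true -> (x <= M)%nat) ->
  (forall s, continuous h s) -> ex_RInt (fun s => (if b then lam s x else 0) * h s) 0 t.
Proof.
  intros Ht Hx Hh. destruct b.
  - apply ex_RInt_cadlag_mult; auto.
    + intros s Hs. apply Hlam_right; auto; lra.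
    + intros s Hs. apply Hlam_left; auto; lra.
  - apply (ex_RInt_ext (fun _ => 0)); [intros; symmetry; apply Rmult_0_l | apply ex_RInt_const].
Qed.

Lemma ex_RInt_Psi_plus (y : R -> rfamily) t i j : 0 <= t -> (forall s, summable M (y s)) ->
  (forall s, l1_continuous M y s) -> (i <= M)%nat -> ex_RInt (fun s => Psi_plus s (y s) i j) 0 t.
Proof.
  intros Ht Hs Hc Hi.
  apply (ex_RInt_ext (fun s => row_gen (mu i) (ppos (y s) i) j
    + in_rate s i * scaled_frac (y s) (i - 1)%nat j - out_rate s i * scaled_frac (y s) i j));
    [intros; rewrite Psi_plus_decomp; reflexivity |].
  apply (ex_RInt_minus (V := R_CompleteNormedModule)); [apply (ex_RInt_plus (V := R_CompleteNormedModule)) |].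
  - apply ex_RInt_continuous_R. intro s. apply row_gen_continuous; auto.
  - apply ex_RInt_rate_mult; auto; [intros; lia |]. intro s; apply scaled_frac_continuous; auto; lia.
  - apply ex_RInt_rate_mult; auto. intro s; apply scaled_frac_continuous; auto.
Qed.

Lemma lam_bounded_nonneg T : 0 < T ->
  exists B, 0 <= B /\ forall t x, 0 <= t <= T -> (x <= M)%nat -> Rabs (lam t x) <= B.
Proof.
  intros HT. destruct (Hlam_bounded T HT) as [B HB]. exists (Rabs B). split; [apply Rabs_pos |].
  intros. eapply Rle_trans; [apply HB; auto | apply RRle_abs].
Qed.

Lemma Psi_plus_lipschitz_on T : 0 < T -> exists L, 0 < L /\ forall s (u v : rfamily),
  0 <= s <= T -> summable M u -> summable M v ->
  summable M (fun i j => Psi_plus s u i j - Psi_plus s v i j) /\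
  l1norm M (fun i j => Psi_plus s u i j - Psi_plus s v i j) <= L * l1norm M (fun i j => u i j - v i j).
Proof.
  intros HT. destruct (lam_bounded_nonneg T HT) as [B [HB HB']].
  assert (HC := Psi_lip_const_nonneg B HB).
  exists (INR (S M) * Psi_lip_const B + 1). split; [assert (H := pos_INR (S M)); nra |].
  intros s u v Hs Hu Hv. destruct (Psi_plus_lipschitz s B HB (fun x Hx => HB' s x Hs Hx) u v) as [H1 H2]; auto.
  split; auto. eapply Rle_trans; [exact H2 |].
  apply Rmult_le_compat_r; [apply l1norm_nonneg, summable_minus; auto | lra].
Qed.

(* Paths are only meaningful on [t >= 0]; they are extended to [R] by [y (Rmax 0 s)]. *)
Definition admissible_path (y : R -> rfamily) :=
  (forall s, 0 <= s -> summable M (y s)) /\ (forall t, l1_continuous M (fun s => y (Rmax 0 s)) t).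

Lemma admissible_summable y : admissible_path y -> forall s, summable M (y (Rmax 0 s)).
Proof. intros [H _] s. apply H, Rmax_l. Qed.

Lemma ex_RInt_Psi_plus_path y a b i j : admissible_path y -> 0 <= a -> 0 <= b -> (i <= M)%nat ->
  ex_RInt (fun s => Psi_plus s (y (Rmax 0 s)) i j) a b.
Proof.
  intros Hy Ha Hb Hi. apply ex_RInt_Chasles with 0; [apply ex_RInt_swap |];
    apply ex_RInt_Psi_plus; auto; try apply admissible_summable; apply Hy.
Qed.

Lemma Psi_plus_path_bounded y T : 0 < T -> admissible_path y -> exists K, 0 <= K /\
  forall s, 0 <= s <= T -> summable M (Psi_plus s (y (Rmax 0 s))) /\ l1norm M (Psi_plus s (y (Rmax 0 s))) <= K.
Proof.
  intros HT Hy. destruct (lam_bounded_nonneg T HT) as [B [HB HB']].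
  destruct (l1_continuous_bounded M (fun s => y (Rmax 0 s)) T) as [Rb [HRb HRb']];
    [lra | apply admissible_summable; auto | apply Hy |].
  assert (HC := Psi_lip_const_nonneg B HB). assert (HM := pos_INR (S M)).
  exists (INR (S M) * Psi_lip_const B * Rb). split; [apply Rmult_le_pos; [apply Rmult_le_pos |] |]; auto.
  intros s Hs. destruct (Psi_plus_bounded s B (y (Rmax 0 s)) HB) as [H1 H2];
    [intros x Hx; apply HB'; auto; lra | apply admissible_summable; auto |].
  split; auto. eapply Rle_trans; [exact H2 |]. apply Rmult_le_compat_l; [apply Rmult_le_pos |]; auto.
Qed.

Definition picard (y : R -> rfamily) : R -> rfamily :=
  fun t i j => P0 x0 y0 i j + RInt (fun s => Psi_plus s (y (Rmax 0 s)) i j) 0 t.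

Lemma picard_minus y t t' i j : admissible_path y -> 0 <= t -> 0 <= t' -> (i <= M)%nat ->
  picard y t i j - picard y t' i j = RInt (fun s => Psi_plus s (y (Rmax 0 s)) i j) t' t.
Proof.
  intros Hy Ht Ht' Hi. unfold picard.
  rewrite <- (RInt_Chasles_minus _ 0 t' t); [ring | |]; apply ex_RInt_Psi_plus_path; auto; lra.
Qed.

Hypothesis Hx0 : (x0 <= M)%nat.

Lemma sum_f_R0_indicator N m :
  sum_f_R0 (fun j => if (j =? m)%nat then 1 else 0) N = if (m <=? N)%nat then 1 else 0.
Proof.
  induction N.
  - destruct m; reflexivity.
  - rewrite tech5, IHN. destruct (Nat.eq_dec m (S N)) as [-> | Hne].
    + rewrite Nat.eqb_refl, (proj2 (Nat.leb_nle (S N) N)), Nat.leb_refl by lia. ring.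
    + rewrite (proj2 (Nat.eqb_neq (S N) m)) by lia.
      destruct (m <=? N)%nat eqn:E.
      * apply Nat.leb_le in E. rewrite (proj2 (Nat.leb_le m (S N))) by lia. ring.
      * apply Nat.leb_nle in E. rewrite (proj2 (Nat.leb_nle m (S N))) by lia. ring.
Qed.

Lemma P0_partial_sums J :
  sum_f_R0 (fun i => sum_f_R0 (fun j => P0 x0 y0 i j) J) M = if (y0 <=? J)%nat then 1 else 0.
Proof.
  unfold P0.
  rewrite (sum_eq _ (fun i => (if (i =? x0)%nat then 1 else 0) * (if (y0 <=? J)%nat then 1 else 0))).
  - rewrite sum_f_R0_scal_r, sum_f_R0_indicator, (proj2 (Nat.leb_le x0 M)) by auto. ring.
  - intros i _. destruct (i =? x0)%nat; simpl; [rewrite sum_f_R0_indicator | rewrite sum_cte]; ring.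
Qed.

Lemma P0_nonneg i j : 0 <= P0 x0 y0 i j.
Proof. unfold P0. destruct (_ && _)%bool; lra. Qed.

Lemma P0_summable : summable M (P0 x0 y0) /\ l1norm M (P0 x0 y0) <= 1.
Proof.
  apply summable_bounded. intro J. rewrite (sum_eq _ (fun i => sum_f_R0 (fun j => P0 x0 y0 i j) J)).
  - rewrite P0_partial_sums. destruct (y0 <=? J)%nat; lra.
  - intros i _. apply sum_eq. intros j _. apply Rabs_right, Rle_ge, P0_nonneg.
Qed.

Lemma picard_lipschitz_in_time y T : 0 < T -> admissible_path y -> exists K, 0 <= K /\
  forall t t', 0 <= t <= T -> 0 <= t' <= T ->
  summable M (fun i j => picard y t i j - picard y t' i j) /\
  l1norm M (fun i j => picard y t i j - picard y t' i j) <= K * Rabs (t - t').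
Proof.
  intros HT Hy. destruct (Psi_plus_path_bounded y T HT Hy) as [K [HK HK']]. exists K. split; auto.
  assert (Main : forall t t', 0 <= t' <= t -> t <= T ->
    summable M (fun i j => picard y t i j - picard y t' i j) /\
    l1norm M (fun i j => picard y t i j - picard y t' i j) <= K * Rabs (t - t')).
  { intros t t' Htt HtT.
    destruct (l1norm_RInt_le M (fun s => Psi_plus s (y (Rmax 0 s))) (fun _ => K) t' t) as [I1 I2]; try lra.
    - intros; apply ex_RInt_Psi_plus_path; auto; lra.
    - apply ex_RInt_const.
    - intros s Hs. apply HK'. lra.
    - assert (E : forall i j, (i <= M)%nat ->
        RInt (fun s => Psi_plus s (y (Rmax 0 s)) i j) t' t = picard y t i j - picard y t' i j)
        by (intros; rewrite picard_minus; auto; lra).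
      split; [exact (summable_ext M _ _ E I1) |].
      rewrite <- (l1norm_ext M _ _ E). rewrite RInt_const in I2. rewrite Rabs_right by lra.
      change (scal (t - t') K) with ((t - t') * K) in I2. lra. }
  intros t t' Ht Ht'. destruct (Rle_or_lt t' t); [apply Main; lra |].
  destruct (Main t' t) as [A1 A2]; try lra. split.
  - apply (summable_ext M (fun i j => - (picard y t' i j - picard y t i j))); [intros; ring |].
    intros i Hi. apply (ex_series_Rabs_le _ (fun j => Rabs (picard y t' i j - picard y t i j)));
      [intro; rewrite Rabs_Rabsolu, Rabs_Ropp; lra | apply A1; auto].
  - rewrite l1norm_minus_sym, Rabs_minus_sym. exact A2.
Qed.

Lemma picard_admissible y : admissible_path y -> admissible_path (picard y).
Proof.
  intros Hy. split.
  - intros s Hs. destruct (picard_lipschitz_in_time y (s + 1)) as [K [_ HK]]; [lra | auto |].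
    destruct (HK s 0) as [A1 _]; try lra.
    assert (Hz : forall i j, picard y 0 i j = P0 x0 y0 i j)
      by (intros; unfold picard; rewrite RInt_point; unfold zero; simpl; ring).
    apply (summable_ext M (fun i j => P0 x0 y0 i j + (picard y s i j - picard y 0 i j)));
      [intros; rewrite Hz; ring |].
    apply l1norm_triangle; auto. apply P0_summable.
  - apply l1_continuous_of_lipschitz. intros T HT.
    destruct (picard_lipschitz_in_time y T HT Hy) as [K [HK HK']]. exists K. split; auto.
    intros. apply HK'; auto.
Qed.

Lemma picard_contraction T : 0 < T -> exists L, 0 < L /\ forall y z, admissible_path y -> admissible_path z ->
  forall t, 0 <= t <= T ->
  l1norm M (fun i j => picard y t i j - picard z t i j)
    <= RInt (fun s => L * l1norm M (fun i j => y (Rmax 0 s) i j - z (Rmax 0 s) i j)) 0 t.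
Proof.
  intros HT. destruct (Psi_plus_lipschitz_on T HT) as [L [HL HL']]. exists L. split; auto.
  intros y z Hy Hz t Ht.
  set (F := fun s (i j : nat) => Psi_plus s (y (Rmax 0 s)) i j - Psi_plus s (z (Rmax 0 s)) i j).
  assert (Sd : forall s, summable M (fun i j => y (Rmax 0 s) i j - z (Rmax 0 s) i j))
    by (intro; apply summable_minus; apply admissible_summable; auto).
  destruct (l1norm_RInt_le M F (fun s => L * l1norm M (fun i j => y (Rmax 0 s) i j - z (Rmax 0 s) i j)) 0 t)
    as [_ I2]; try lra.
  - intros i j Hi. apply (ex_RInt_minus (V := R_CompleteNormedModule)); apply ex_RInt_Psi_plus_path; auto; lra.
  - apply ex_RInt_continuous_R. intro s.
    apply (continuous_mult (K := R_AbsRing) (fun _ => L)); [apply continuous_const |].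
    apply continuous_l1norm; auto. apply l1_continuous_minus; try apply admissible_summable; auto;
      [apply Hy | apply Hz].
  - intros s Hs. apply HL'; [lra | |]; apply admissible_summable; auto.
  - rewrite <- (l1norm_ext M (fun i j => RInt (fun s => F s i j) 0 t)); auto.
    intros i j Hi. unfold F, picard.
    match goal with |- _ = ?p + ?a - (?p + ?b) => replace (p + a - (p + b)) with (a - b) by ring end.
    apply RInt_minus_R; apply ex_RInt_Psi_plus_path; auto; lra.
Qed.

(** * Convergence of the Picard iterates *)

Lemma continuous_path_dist y z t : admissible_path y -> admissible_path z ->
  continuous (fun s => l1norm M (fun i j => y (Rmax 0 s) i j - z (Rmax 0 s) i j)) t.
Proof.
  intros Hy Hz. apply continuous_l1norm; [intro; apply summable_minus; apply admissible_summable; auto |].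
  apply l1_continuous_minus; try apply admissible_summable; auto; [apply Hy | apply Hz].
Qed.

Lemma path_dist_bounded y z T : 0 <= T -> admissible_path y -> admissible_path z ->
  exists K, 0 <= K /\ forall s, 0 <= s <= T -> l1norm M (fun i j => y s i j - z s i j) <= K.
Proof.
  intros HT Hy Hz.
  destruct (l1_continuous_bounded M (fun s i j => y (Rmax 0 s) i j - z (Rmax 0 s) i j) T) as [K [HK HK']]; auto.
  - intro; apply summable_minus; apply admissible_summable; auto.
  - intro; apply l1_continuous_minus; try apply admissible_summable; auto; [apply Hy | apply Hz].
  - exists K. split; auto. intros s Hs. specialize (HK' s Hs). rewrite Rmax_right in HK' by lra. exact HK'.
Qed.

Fixpoint picard_iter (n : nat) : R -> rfamily :=
  match n with
  | O => fun _ => P0 x0 y0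
  | S n => picard (picard_iter n)
  end.

Lemma picard_iter_admissible n : admissible_path (picard_iter n).
Proof.
  induction n; simpl; [| apply picard_admissible; auto].
  split; [intros; apply P0_summable |].
  intros t e He. exists 1. split; [lra |]. intros. rewrite l1norm_diag. exact He.
Qed.

Lemma picard_iter_geometric T : 0 < T -> exists C, 0 <= C /\ forall n t, 0 <= t <= T ->
  l1norm M (fun i j => picard_iter (S n) t i j - picard_iter n t i j) <= C * (/2) ^ n.
Proof.
  intros HT. destruct (picard_contraction T HT) as [L [HL HL']].
  destruct (path_dist_bounded (picard_iter 1) (picard_iter 0) T) as [K [HK HK']];
    try apply picard_iter_admissible; [lra |].
  set (a := fun n s => l1norm M (fun i j => picard_iter (S n) (Rmax 0 s) i j - picard_iter n (Rmax 0 s) i j)).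
  assert (Ha : forall n t, 0 <= t <= T -> a n t <= K * (/2) ^ n * exp (2 * L * t)).
  { apply iterated_gronwall; auto.
    - intros n s. apply continuous_path_dist; apply picard_iter_admissible.
    - intros t Ht. unfold a. rewrite Rmax_right by lra. apply HK'; auto.
    - intros n t Ht. unfold a at 1. rewrite Rmax_right by lra.
      apply (HL' (picard_iter (S n)) (picard_iter n)); [apply picard_iter_admissible .. | auto]. }
  exists (K * exp (2 * L * T)). split; [apply Rmult_le_pos; [| left; apply exp_pos]; auto |].
  intros n t Ht. specialize (Ha n t Ht). unfold a in Ha. rewrite Rmax_right in Ha by lra.
  eapply Rle_trans; [exact Ha |].
  assert (exp (2 * L * t) <= exp (2 * L * T)) by (apply exp_le_of_le; nra).
  assert (0 <= K * (/2) ^ n) by (apply Rmult_le_pos; [| apply pow_le]; lra).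
  apply Rle_trans with (K * (/2) ^ n * exp (2 * L * T)); [apply Rmult_le_compat_l; auto | right; ring].
Qed.

Definition picard_limit (t : R) : rfamily :=
  fun i j => P0 x0 y0 i j + Series (fun n => picard_iter (S n) t i j - picard_iter n t i j).

Lemma Series_geom_half_tail c n : 0 <= c -> ex_series (fun k => c * (/2) ^ (n + k)) /\
  Series (fun k => c * (/2) ^ (n + k)) = 2 * c * (/2) ^ n.
Proof.
  intros Hc. assert (Hg : is_series (fun k => (/2) ^ k) (/ (1 - /2)))
    by (apply is_series_geom; rewrite Rabs_right; lra).
  assert (E : forall k, c * (/2) ^ (n + k) = (c * (/2) ^ n) * (/2) ^ k) by (intro; rewrite pow_add; ring).
  split.
  - apply (ex_series_ext (fun k => (c * (/2) ^ n) * (/2) ^ k)); [intro k; rewrite E; reflexivity |].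
    apply ex_series_scal_R. eexists; exact Hg.
  - rewrite (Series_ext _ (fun k => (c * (/2) ^ n) * (/2) ^ k)) by apply E.
    rewrite Series_scal_l, (is_series_unique (pow (/2)) _ Hg). field.
Qed.

Lemma Series_tail_succ (a : nat -> R) n : ex_series (fun k => a (n + k)%nat) ->
  Series (fun k => a (n + k)%nat) = a n + Series (fun k => a (S n + k)%nat).
Proof.
  intros Hex. rewrite Series_incr_1 by auto. rewrite Nat.add_0_r. f_equal.
  apply Series_ext. intro k. f_equal. lia.
Qed.

Lemma Series_double_sum (a : nat -> nat -> nat -> R) N J :
  (forall i j, (i <= N)%nat -> ex_series (a i j)) ->
  Series (fun k => sum_f_R0 (fun i => sum_f_R0 (fun j => a i j k) J) N) =
  sum_f_R0 (fun i => sum_f_R0 (fun j => Series (a i j)) J) N.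
Proof.
  intros H.
  assert (Inner : forall i, (i <= N)%nat -> ex_series (fun k => sum_f_R0 (fun j => a i j k) J) /\
     Series (fun k => sum_f_R0 (fun j => a i j k) J) = sum_f_R0 (fun j => Series (a i j)) J)
    by (intros i Hi; apply (Series_sum_f_R0 (fun j k => a i j k) J); intros; apply H; auto).
  destruct (Series_sum_f_R0 (fun i k => sum_f_R0 (fun j => a i j k) J) N) as [_ E]; [intros; apply Inner; auto |].
  rewrite E. apply sum_eq. intros; apply Inner; auto.
Qed.

Lemma picard_limit_close T : 0 < T -> exists C, 0 <= C /\ forall n t, 0 <= t <= T ->
  summable M (fun i j => picard_limit t i j - picard_iter n t i j) /\
  l1norm M (fun i j => picard_limit t i j - picard_iter n t i j) <= 2 * C * (/2) ^ n.
Proof.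
  intros HT. destruct (picard_iter_geometric T HT) as [C [HC Hest]]. exists C. split; auto.
  intros n t Ht.
  set (D := fun i j k => picard_iter (S k) t i j - picard_iter k t i j).
  assert (HsD : forall k, summable M (fun i j => D i j k))
    by (intro k; apply summable_minus; apply picard_iter_admissible; lra).
  assert (HD : forall i j k, (i <= M)%nat -> Rabs (D i j k) <= C * (/2) ^ k)
    by (intros; eapply Rle_trans; [apply (Rabs_le_l1norm M (fun i j => D i j k)); auto | apply Hest; auto]).
  assert (HexA : forall i j m, (i <= M)%nat -> ex_series (fun k => Rabs (D i j (m + k)%nat))).
  { intros i j m Hi. apply (ex_series_Rabs_le _ (fun k => C * (/2) ^ (m + k))).
    - intro k. rewrite Rabs_Rabsolu. apply HD; auto.
    - apply Series_geom_half_tail; auto. }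
  assert (E : forall m i j, (i <= M)%nat -> picard_limit t i j - picard_iter m t i j = Series (fun k => D i j (m + k)%nat)).
  { induction m; intros i j Hi.
    - unfold picard_limit. simpl. ring_simplify. apply Series_ext. reflexivity.
    - specialize (IHm i j Hi).
      rewrite (Series_tail_succ (D i j) m) in IHm by (apply ex_series_Rabs, HexA; auto).
      unfold D in IHm |- *. lra. }
  apply summable_bounded. intro J.
  rewrite (sum_eq _ (fun i => sum_f_R0 (fun j => Rabs (Series (fun k => D i j (n + k)%nat))) J))
    by (intros i Hi; apply sum_eq; intros j _; rewrite E; auto).
  apply Rle_trans with (sum_f_R0 (fun i => sum_f_R0 (fun j => Series (fun k => Rabs (D i j (n + k)%nat))) J) M).
  { apply sum_Rle; intros i Hi. apply sum_Rle; intros j _. apply Series_Rabs, HexA; auto. }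
  rewrite <- (Series_double_sum (fun i j k => Rabs (D i j (n + k)%nat))) by (intros; apply HexA; auto).
  destruct (Series_geom_half_tail C n HC) as [G1 G2]. rewrite <- G2.
  apply Series_le; auto. intro k. split; [apply cond_pos_sum; intros; apply cond_pos_sum; intros; apply Rabs_pos |].
  eapply Rle_trans; [apply (partial_sums_le_l1norm M (fun i j => D i j (n + k)%nat) J (HsD _)) |].
  apply Hest; auto.
Qed.

Lemma picard_limit_admissible : admissible_path picard_limit.
Proof.
  assert (Hs : forall s, 0 <= s -> summable M (picard_limit s)).
  { intros s Hs. destruct (picard_limit_close (s + 1)) as [C [_ HC]]; [lra |].
    destruct (HC 0%nat s) as [H1 _]; [lra |].
    apply (summable_ext M (fun i j => P0 x0 y0 i j + (picard_limit s i j - picard_iter 0 s i j)));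
      [intros; simpl; ring |].
    apply l1norm_triangle; auto. apply P0_summable. }
  split; auto. intros t e He.
  set (T := Rabs t + 1). assert (Ht0 := Rabs_pos t).
  destruct (picard_limit_close T) as [C [HC HC']]; [unfold T; lra |].
  destruct (pow_half_small (2 * C) (e / 3)) as [N HN]; [lra | lra |].
  destruct (proj2 (picard_iter_admissible N) t (e / 3)) as [d [Hd Hd']]; [lra |].
  exists (Rmin 1 d). split; [apply Rmin_pos; lra |].
  intros s Hs'. assert (Hs1 : Rabs (s - t) < 1) by (eapply Rlt_le_trans; [exact Hs' | apply Rmin_l]).
  assert (Hs2 : Rabs (s - t) < d) by (eapply Rlt_le_trans; [exact Hs' | apply Rmin_r]).
  assert (Hst : s - t <= Rabs (s - t)) by apply RRle_abs. assert (t <= Rabs t) by apply RRle_abs.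
  assert (B1 : 0 <= Rmax 0 s <= T) by (split; [apply Rmax_l | unfold T, Rmax; destruct Rle_dec; lra]).
  assert (B2 : 0 <= Rmax 0 t <= T) by (split; [apply Rmax_l | unfold T, Rmax; destruct Rle_dec; lra]).
  specialize (Hd' s Hs2). cbv beta in Hd'.
  set (a := Rmax 0 s) in *. set (b := Rmax 0 t) in *.
  assert (Pa := proj1 (picard_iter_admissible N) a (proj1 B1)).
  assert (Pb := proj1 (picard_iter_admissible N) b (proj1 B2)).
  assert (Sa := Hs a (proj1 B1)). assert (Sb := Hs b (proj1 B2)).
  eapply Rle_lt_trans; [apply (l1norm_dist_triangle M (picard_limit a) (picard_iter N a) (picard_limit b)); auto |].
  eapply Rle_lt_trans;
    [apply Rplus_le_compat_l, (l1norm_dist_triangle M (picard_iter N a) (picard_iter N b) (picard_limit b)); auto |].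
  destruct (HC' N a B1) as [_ X1]. destruct (HC' N b B2) as [_ X2]. rewrite l1norm_minus_sym in X2. lra.
Qed.

Lemma picard_limit_fixed t i j : 0 <= t -> (i <= M)%nat ->
  picard_limit t i j = picard picard_limit t i j.
Proof.
  intros Ht Hi.
  destruct (picard_limit_close (t + 1)) as [C [HC HC']]; [lra |].
  destruct (picard_contraction (t + 1)) as [L [HL HL']]; [lra |].
  assert (Hz : forall n, Rabs (picard_limit t i j - picard picard_limit t i j)
                         <= 0 + (2 * C + t * (L * (2 * C))) * (/2) ^ n).
  { intro n. assert (Hpow : 0 <= (/2) ^ n) by (apply pow_le; lra).
    replace (picard_limit t i j - picard picard_limit t i j) with
      ((picard_limit t i j - picard_iter (S n) t i j) + (picard (picard_iter n) t i j - picard picard_limit t i j))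
      by (simpl; ring).
    eapply Rle_trans; [apply Rabs_triang |]. rewrite Rplus_0_l, Rmult_plus_distr_r. apply Rplus_le_compat.
    - destruct (HC' (S n) t) as [X1 X2]; [lra |].
      eapply Rle_trans; [apply (Rabs_le_l1norm M (fun i j => picard_limit t i j - picard_iter (S n) t i j)); auto |].
      eapply Rle_trans; [exact X2 | simpl; nra].
    - eapply Rle_trans; [apply (Rabs_le_l1norm M (fun i j => picard (picard_iter n) t i j - picard picard_limit t i j)); auto |].
      { apply summable_minus; apply picard_admissible; auto; try apply picard_iter_admissible; try apply picard_limit_admissible. }
      eapply Rle_trans; [apply HL'; [apply picard_iter_admissible | apply picard_limit_admissible | lra] |].
      apply Rle_trans with (RInt (fun _ => L * (2 * C * (/2) ^ n)) 0 t);
        [| rewrite RInt_const; right; unfold scal; simpl; unfold mult; simpl; ring].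
      apply RInt_le; [lra | | apply ex_RInt_const |].
      + apply ex_RInt_continuous_R. intro s.
        apply (continuous_mult (K := R_AbsRing) (fun _ => L)); [apply continuous_const |].
        apply continuous_path_dist; [apply picard_iter_admissible | apply picard_limit_admissible].
      + intros s Hs. rewrite Rmax_right by lra. apply Rmult_le_compat_l; [lra |].
        rewrite l1norm_minus_sym. apply HC'. lra. }
  assert (H0 := Rabs_pos (picard_limit t i j - picard picard_limit t i j)).
  assert (Rabs (picard_limit t i j - picard picard_limit t i j) <= 0).
  { apply (pow_half_vanish _ _ (2 * C + t * (L * (2 * C)))); [| exact Hz].
    assert (0 <= t * (L * (2 * C))) by (apply Rmult_le_pos; nra). lra. }
  assert (Rabs (picard_limit t i j - picard picard_limit t i j) = 0) by lra.
  apply Rabs_eq_0 in H1. lra.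
Qed.

Lemma fixed_point_is_RInt y t i j : admissible_path y -> 0 <= t -> (i <= M)%nat ->
  y t i j = picard y t i j -> is_RInt (fun s => Psi_plus s (y s) i j) 0 t (y t i j - P0 x0 y0 i j).
Proof.
  intros Hy Ht Hi Hfix. rewrite Hfix. unfold picard.
  rewrite (Rplus_comm (P0 x0 y0 i j)). unfold Rminus. rewrite Rplus_assoc, Rplus_opp_r, Rplus_0_r.
  apply (is_RInt_ext (fun s => Psi_plus s (y (Rmax 0 s)) i j)).
  - intros s Hs. rewrite Rmin_left, Rmax_right in Hs by lra. rewrite Rmax_right by lra. reflexivity.
  - exact (RInt_correct _ _ _ (ex_RInt_Psi_plus_path y 0 t i j Hy (Rle_refl 0) Ht Hi)).
Qed.

Lemma fixed_point_of_is_RInt y t i j : 0 <= t ->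
  is_RInt (fun s => Psi_plus s (y s) i j) 0 t (y t i j - P0 x0 y0 i j) -> y t i j = picard y t i j.
Proof.
  intros Ht H. unfold picard.
  rewrite (RInt_ext _ (fun s => Psi_plus s (y s) i j)), (is_RInt_unique _ _ _ _ H); [ring |].
  intros s Hs. rewrite Rmin_left, Rmax_right in Hs by lra. rewrite Rmax_right by lra. reflexivity.
Qed.

Lemma fixed_points_unique y z :
  admissible_path y -> admissible_path z ->
  (forall t i j, 0 <= t -> (i <= M)%nat -> y t i j = picard y t i j) ->
  (forall t i j, 0 <= t -> (i <= M)%nat -> z t i j = picard z t i j) ->
  forall t i j, 0 <= t -> (i <= M)%nat -> y t i j = z t i j.
Proof.
  intros Hy Hz Hyfix Hzfix t i j Ht Hi.
  destruct (picard_contraction (t + 1)) as [L [HL HL']]; [lra |].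
  destruct (path_dist_bounded y z (t + 1)) as [K [HK HK']]; auto; [lra |].
  set (d := fun s => l1norm M (fun i j => y (Rmax 0 s) i j - z (Rmax 0 s) i j)).
  assert (Hd : forall s, 0 <= s -> d s = l1norm M (fun i j => picard y s i j - picard z s i j)).
  { intros s Hs. unfold d. rewrite Rmax_right by lra.
    apply l1norm_ext. intros; rewrite Hyfix, Hzfix; auto. }
  assert (Hd0 : d t <= 0).
  { apply (iterated_gronwall_zero d (t + 1) L K); auto; [| | | lra].
    - intro s. apply continuous_path_dist; auto.
    - intros s Hs. unfold d. rewrite Rmax_right by lra. apply HK'; lra.
    - intros s Hs. rewrite Hd by lra. apply HL'; auto. }
  unfold d in Hd0. rewrite Rmax_right in Hd0 by lra.
  assert (Habs : Rabs (y t i j - z t i j) <= 0).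
  { eapply Rle_trans; [| exact Hd0].
    apply (Rabs_le_l1norm M (fun i j => y t i j - z t i j)); auto.
    apply summable_minus; [apply Hy | apply Hz]; lra. }
  assert (Habs0 : Rabs (y t i j - z t i j) = 0) by (assert (H0 := Rabs_pos (y t i j - z t i j)); lra).
  apply Rabs_eq_0 in Habs0. lra.
Qed.

Lemma solution_admissible Q : is_solution M x0 y0 lam f mu Q -> admissible_path Q.
Proof.
  intros [HQ1 [HQ2 _]]. split; [exact HQ1 |]. intros t0 e He.
  destruct (eps_of_lim_within_nonneg _ (Rmax 0 t0) (HQ2 (Rmax 0 t0) (Rmax_l 0 t0)) e He) as [d [Hd Hd']].
  exists d. split; auto. intros s Hs.
  assert (X := Hd' (Rmax 0 s) (Rmax_l 0 s) (Rle_lt_trans _ _ _ (Rabs_Rmax0_le s t0) Hs)).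
  rewrite Rabs_right in X; [exact X |].
  apply Rle_ge, l1norm_nonneg, summable_minus; apply HQ1, Rmax_l.
Qed.

Lemma picard_limit_is_solution : is_solution M x0 y0 lam f mu picard_limit.
Proof.
  destruct picard_limit_admissible as [Hsum Hc]. split; [| split]; auto.
  - intros t Ht. apply lim_within_nonneg_of_eps. intros e He.
    destruct (Hc t e He) as [d [Hd Hd']]. exists d. split; auto.
    intros s Hs Hst. specialize (Hd' s Hst). rewrite !Rmax_right in Hd' by lra.
    rewrite Rabs_right; [exact Hd' |]. apply Rle_ge, l1norm_nonneg, summable_minus; auto.
  - intros t Ht i j Hi. apply fixed_point_is_RInt; auto; [split; auto |].
    apply picard_limit_fixed; auto.
Qed.

Lemma picard_limit_nonneg t i j : 0 <= t -> (i <= M)%nat -> 0 <= picard_limit t i j.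
Proof.
  intros Ht Hi. assert (Hadm := picard_limit_admissible).
  apply (nonneg_of_inward_rate (fun s => picard_limit s i j) (fun s => Psi_plus s (picard_limit (Rmax 0 s)) i j)); auto.
  - rewrite picard_limit_fixed by (auto; lra). unfold picard. rewrite RInt_point.
    unfold zero; simpl. rewrite Rplus_0_r. apply P0_nonneg.
  - intros s Hs e He. destruct (proj2 Hadm s e He) as [d [Hd Hd']]. exists d. split; auto.
    intros u Hu Hus. specialize (Hd' u Hus). rewrite !Rmax_right in Hd' by lra.
    eapply Rle_lt_trans; [| exact Hd'].
    apply (Rabs_le_l1norm M (fun i j => picard_limit u i j - picard_limit s i j)); auto.
    apply summable_minus; apply Hadm; lra.
  - intros s Hs. split; [apply ex_RInt_Psi_plus_path; auto; lra |].
    rewrite (picard_limit_fixed t), (picard_limit_fixed s), picard_minus; auto; lra.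
  - intros s Hs Hneg. rewrite Rmax_right by lra.
    apply Psi_plus_nonneg_at_nonpos; [lra | apply Hadm; lra | auto | lra].
Qed.

Lemma solution_unique Q : is_solution M x0 y0 lam f mu Q ->
  forall t i j, 0 <= t -> (i <= M)%nat -> Q t i j = picard_limit t i j.
Proof.
  intros HQ. apply fixed_points_unique; [apply solution_admissible; auto | apply picard_limit_admissible | |].
  - intros t i j Ht Hi. apply fixed_point_of_is_RInt; auto. apply HQ; auto.
  - intros; apply picard_limit_fixed; auto.
Qed.

(** * Conservation of mass *)

Hypothesis HM : (1 <= M)%nat.

(* What leaves level [i] enters level [i + 1]; nothing leaves level [M]. *)
Lemma sum_in_rate_out_rate s (g : nat -> R) :
  sum_f_R0 (fun i => in_rate s i * g (i - 1)%nat) M = sum_f_R0 (fun i => out_rate s i * g i) M.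
Proof.
  unfold in_rate, out_rate. destruct M as [| M']; [lia |].
  rewrite decomp_sum, tech5 by lia. simpl pred.
  replace (S M' - 1)%nat with M' by lia.
  rewrite (proj2 (Nat.leb_nle (S M') M')) by lia.
  simpl (1 <=? 0)%nat. rewrite Rmult_0_l, Rplus_0_l, Rmult_0_l, Rplus_0_r.
  apply sum_eq. intros i Hi. rewrite (proj2 (Nat.leb_le i M')) by lia.
  replace (S i - 1)%nat with i by lia. reflexivity.
Qed.

Definition gen_partial i k J := sum_f_R0 (mu i k) J.

Definition mass_flux (y : rfamily) J := sum_f_R0 (fun i => Series (fun k => ppos y i k * gen_partial i k J)) M.

Lemma ex_series_mass_flux_term (w : nat -> R) i J : (i <= M)%nat -> row_summable w ->
  ex_series (fun k => Rabs (w k * gen_partial i k J)).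
Proof.
  intros Hi Hw. apply (ex_series_Rabs_le _ (fun k => 2 * Bmu * Rabs (w k))); [| apply ex_series_scal_R, Hw].
  intro k. rewrite Rabs_Rabsolu, Rabs_mult, Rmult_comm.
  apply Rmult_le_compat_r; [apply Rabs_pos | apply (Rabs_gen_partial_sum_le (mu i) Bmu (Hmu i Hi))].
Qed.

Lemma Psi_plus_partial_mass s (y : rfamily) J : summable M y ->
  sum_f_R0 (fun i => sum_f_R0 (fun j => Psi_plus s y i j) J) M = mass_flux y J.
Proof.
  intros Hy.
  set (a := fun k => sum_f_R0 (fun j => scaled_frac y k j) J).
  assert (E : forall i, (i <= M)%nat -> sum_f_R0 (fun j => Psi_plus s y i j) J =
     Series (fun k => ppos y i k * gen_partial i k J) + in_rate s i * a (i - 1)%nat - out_rate s i * a i).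
  { intros i Hi.
    rewrite (sum_eq _ (fun j => row_gen (mu i) (ppos y i) j + in_rate s i * scaled_frac y (i - 1)%nat j
                                 - out_rate s i * scaled_frac y i j) J) by (intros; apply Psi_plus_decomp).
    rewrite minus_sum, sum_plus. unfold a. rewrite !sum_f_R0_scal_l. f_equal. f_equal.
    destruct (Series_sum_f_R0 (fun j k => mu i k j * ppos y i k) J) as [_ HS].
    { intros. apply ex_series_Rabs, (ex_series_row_gen (mu i) Bmu (Hmu i Hi)), row_summable_pos, Hy; auto. }
    unfold row_gen. rewrite <- HS. apply Series_ext. intro k.
    unfold gen_partial. rewrite Rmult_comm, <- sum_f_R0_scal_r. reflexivity. }
  rewrite (sum_eq _ _ M E), minus_sum, sum_plus, (sum_in_rate_out_rate s a). unfold mass_flux. ring.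
Qed.

Lemma mass_flux_vanishes (y : rfamily) : summable M y -> is_lim_seq (mass_flux y) 0.
Proof.
  intros Hy. apply (is_lim_seq_sum_f_R0_0 (fun i J => Series (fun k => ppos y i k * gen_partial i k J))).
  intros i Hi. destruct (Hmu i Hi) as (_ & _ & Hrow & _).
  apply (is_lim_seq_Series_dominated (ppos y i) (fun J k => gen_partial i k J) (2 * Bmu)).
  - apply row_summable_pos, Hy; auto.
  - assert (H := Bmu_nonneg); lra.
  - intros; apply (Rabs_gen_partial_sum_le (mu i) Bmu (Hmu i Hi)).
  - intro k. apply is_lim_seq_Reals, is_series_Reals, Hrow.
Qed.

Lemma mass_flux_lipschitz (y z : rfamily) J : summable M y -> summable M z ->
  Rabs (mass_flux y J - mass_flux z J) <= INR (S M) * (2 * Bmu) * l1norm M (fun i j => y i j - z i j).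
Proof.
  intros Hy Hz. unfold mass_flux.
  assert (E : forall i, (i <= M)%nat ->
     Series (fun k => ppos y i k * gen_partial i k J) - Series (fun k => ppos z i k * gen_partial i k J)
     = Series (fun k => (ppos y i k - ppos z i k) * gen_partial i k J)).
  { intros i Hi. rewrite <- Series_minus; [apply Series_ext; intro; ring | |];
      apply ex_series_Rabs, ex_series_mass_flux_term, row_summable_pos; auto; [apply Hy | apply Hz]; auto. }
  rewrite <- minus_sum, (sum_eq _ _ M E).
  eapply Rle_trans; [apply Rsum_abs |].
  apply Rle_trans with (sum_f_R0 (fun _ => 2 * Bmu * l1norm M (fun i j => y i j - z i j)) M);
    [| rewrite sum_cte; right; ring].
  apply sum_Rle. intros i Hi.
  destruct (row_norm_pos_minus y z i) as [P1 P2]; [apply Hy | apply Hz |]; auto.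
  assert (Hd := row_norm_le_l1norm M (fun i j => y i j - z i j) i (summable_minus M y z Hy Hz) Hi).
  assert (Hb : forall k, Rabs ((ppos y i k - ppos z i k) * gen_partial i k J)
                        <= 2 * Bmu * Rabs (ppos y i k - ppos z i k)).
  { intro k. rewrite Rabs_mult, Rmult_comm. apply Rmult_le_compat_r; [apply Rabs_pos |].
    apply (Rabs_gen_partial_sum_le (mu i) Bmu (Hmu i Hi)). }
  eapply Rle_trans; [apply Series_Rabs, ex_series_mass_flux_term; auto |].
  apply Rle_trans with (Series (fun k => 2 * Bmu * Rabs (ppos y i k - ppos z i k))).
  - apply Series_le; [intro k; split; [apply Rabs_pos | apply Hb] | apply ex_series_scal_R, P1].
  - rewrite Series_scal_l. apply Rmult_le_compat_l; [assert (H := Bmu_nonneg); lra |].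
    eapply Rle_trans; [exact P2 | exact Hd].
Qed.

Lemma picard_limit_partial_mass t J : 0 <= t ->
  ex_RInt (fun s => mass_flux (picard_limit s) J) 0 t /\
  sum_f_R0 (fun i => sum_f_R0 (fun j => picard_limit t i j) J) M
    = (if (y0 <=? J)%nat then 1 else 0) + RInt (fun s => mass_flux (picard_limit s) J) 0 t.
Proof.
  intros Ht. assert (Hadm := picard_limit_admissible).
  set (g := fun i j s => Psi_plus s (picard_limit (Rmax 0 s)) i j).
  assert (Ei : forall i, (i <= M)%nat ->
    ex_RInt (fun s => sum_f_R0 (fun j => g i j s) J) 0 t /\
    RInt (fun s => sum_f_R0 (fun j => g i j s) J) 0 t = sum_f_R0 (fun j => RInt (g i j) 0 t) J)
    by (intros i Hi; apply (ex_RInt_sum_f_R0 (fun j => g i j)); intros; apply ex_RInt_Psi_plus_path; auto; lra).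
  destruct (ex_RInt_sum_f_R0 (fun i s => sum_f_R0 (fun j => g i j s) J) 0 t M) as [E2 E3];
    [intros; apply Ei; auto |].
  assert (Eflux : forall s, 0 < s < t ->
    sum_f_R0 (fun i => sum_f_R0 (fun j => g i j s) J) M = mass_flux (picard_limit s) J).
  { intros s Hs. unfold g. rewrite Rmax_right by lra. apply Psi_plus_partial_mass, Hadm; lra. }
  split.
  - eapply ex_RInt_ext; [| exact E2]. intros s Hs. rewrite Rmin_left, Rmax_right in Hs by lra. exact (Eflux s Hs).
  - rewrite <- P0_partial_sums.
    rewrite (RInt_ext _ (fun s => sum_f_R0 (fun i => sum_f_R0 (fun j => g i j s) J) M))
      by (intros s Hs; rewrite Rmin_left, Rmax_right in Hs by lra; symmetry; exact (Eflux s Hs)).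
    rewrite E3, <- sum_plus. apply sum_eq. intros i Hi. rewrite (proj2 (Ei i Hi)), <- sum_plus.
    apply sum_eq. intros j _. rewrite picard_limit_fixed by auto. reflexivity.
Qed.

Lemma picard_limit_mass t : 0 <= t -> l1norm M (picard_limit t) = 1.
Proof.
  intros Ht. assert (Hadm := picard_limit_admissible).
  set (mass := fun J => sum_f_R0 (fun i => sum_f_R0 (fun j => picard_limit t i j) J) M).
  set (th := fun J s => mass_flux (picard_limit (Rmax 0 s)) J).
  assert (Hunif : forall e, 0 < e -> exists N, forall J, (N <= J)%nat -> forall s, 0 <= s <= t -> Rabs (th J s) <= e).
  { destruct (picard_lipschitz_in_time picard_limit (t + 1)) as [K [HK HK']]; [lra | auto |].
    apply (equilipschitz_unif_lim th 0 t (INR (S M) * (2 * Bmu) * K)); auto.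
    - apply Rmult_le_pos; auto. apply Rmult_le_pos; [apply pos_INR | assert (H := Bmu_nonneg); lra].
    - intros J s s' Hs Hs'. unfold th. rewrite !Rmax_right by lra.
      eapply Rle_trans; [apply mass_flux_lipschitz; apply Hadm; lra |].
      apply Rle_trans with (INR (S M) * (2 * Bmu) * (K * Rabs (s - s'))); [| right; ring].
      apply Rmult_le_compat_l; [apply Rmult_le_pos; [apply pos_INR | assert (H := Bmu_nonneg); lra] |].
      rewrite (l1norm_ext M _ (fun i j => picard picard_limit s i j - picard picard_limit s' i j))
        by (intros; rewrite <- !picard_limit_fixed by (auto; lra); reflexivity).
      apply HK'; lra.
    - intros s Hs. apply mass_flux_vanishes, Hadm, Rmax_l. }
  assert (Hlim : is_lim_seq mass 1).
  { apply is_lim_seq_Reals. intros e He.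
    destruct (Hunif (e / (t + 1))) as [N HN]; [apply Rdiv_lt_0_compat; lra |].
    exists (Nat.max N y0). intros J HJ. unfold R_dist.
    destruct (picard_limit_partial_mass t J Ht) as [X1 X2]. unfold mass. rewrite X2.
    rewrite (proj2 (Nat.leb_le y0 J)) by lia.
    rewrite Rplus_comm. unfold Rminus. rewrite Rplus_assoc, Rplus_opp_r, Rplus_0_r.
    eapply Rle_lt_trans; [apply (abs_RInt_le_const _ 0 t (e / (t + 1)) Ht X1) |].
    - intros s Hs. specialize (HN J ltac:(lia) s Hs). unfold th in HN. rewrite Rmax_right in HN by lra. exact HN.
    - replace ((t - 0) * (e / (t + 1))) with (e - e / (t + 1)) by (field; lra).
      assert (0 < e / (t + 1)) by (apply Rdiv_lt_0_compat; lra). lra. }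
  assert (Hs := proj1 Hadm t Ht).
  unfold l1norm. rewrite (sum_eq _ (fun i => Series (picard_limit t i)))
    by (intros i Hi; apply Series_ext; intro j; apply Rabs_right, Rle_ge, picard_limit_nonneg; auto).
  destruct (Series_sum_f_R0 (picard_limit t) M) as [Ex Eq]; [intros i Hi; apply ex_series_Rabs, Hs; auto |].
  rewrite <- Eq.
  assert (L1 := is_lim_seq_partial_sums _ Ex).
  assert (L2 : is_lim_seq (sum_f_R0 (fun j => sum_f_R0 (fun i => picard_limit t i j) M)) 1)
    by (apply (is_lim_seq_ext mass); [intro J; unfold mass; rewrite sum_f_R0_swap; reflexivity | exact Hlim]).
  apply is_lim_seq_unique in L1, L2. rewrite L1 in L2. injection L2; auto.
Qed.

End Solution.

Theorem proposition3 (M : nat) (x0 y0 : nat) (lam : R -> nat -> R) (f : R -> R)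
  (mu : nat -> nat -> nat -> R) :
  (1 <= M)%nat ->
  (x0 <= M)%nat ->
  (forall t x, 0 <= t -> (x <= M)%nat -> 0 <= lam t x) ->
  (* t |-> lambda(t,x) is càdlàg *)
  (forall x, (x <= M)%nat -> forall t, 0 <= t ->
     filterlim (fun s => lam s x) (at_right t) (locally (lam t x))) ->
  (forall x, (x <= M)%nat -> forall t, 0 < t ->
     exists l, filterlim (fun s => lam s x) (at_left t) (locally l)) ->
  (forall t, 0 <= t -> lam t M = 0) ->
  (forall T, 0 < T -> exists B, forall t x, 0 <= t <= T -> (x <= M)%nat ->
     Rabs (lam t x) <= B) ->
  (forall y, continuous f y) ->
  (exists flo fup, 0 < flo /\ forall y, flo <= f y <= fup) ->
  (forall k i j, (k <= M)%nat -> i <> j -> 0 <= mu k i j) ->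
  (forall k i, (k <= M)%nat -> mu k i i <= 0) ->
  (forall k i, (k <= M)%nat -> is_series (fun j => mu k i j) 0) ->
  (forall k, (k <= M)%nat -> exists B, forall i, Rabs (mu k i i) <= B) ->
  exists P : R -> rfamily,
    is_solution M x0 y0 lam f mu P /\
    (forall Q : R -> rfamily, is_solution M x0 y0 lam f mu Q ->
       forall t i j, 0 <= t -> (i <= M)%nat -> Q t i j = P t i j) /\
    (forall t i j, 0 <= t -> (i <= M)%nat -> 0 <= P t i j) /\
    (forall t, 0 <= t -> l1norm M (P t) = 1).
Proof.
  (* [Psi] never uses [lambda(t, M)], and [f] is only evaluated at integers. *)
  intros HM Hx0 Hlam0 Hright Hleft _ Hbound _ [flo [fup [Hflo Hf]]] Hoff Hdiag Hrow Hdiag_bounded.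
  destruct (uniform_bound_finite (fun k i => Rabs (mu k i i)) M Hdiag_bounded) as [Bmu HBmu].
  assert (Hmu : forall k, (k <= M)%nat -> conservative_generator (mu k) Bmu)
    by (intros k Hk; repeat split; intros; auto).
  assert (Hr : forall x, (x <= M)%nat -> forall t, 0 <= t -> right_continuous_at (fun s => lam s x) t)
    by (intros; apply right_continuous_at_filterlim, Hright; auto).
  assert (Hl : forall x, (x <= M)%nat -> forall t, 0 < t -> exists l, left_limit_at (fun s => lam s x) t l)
    by (intros x Hx t Ht; destruct (Hleft x Hx t Ht) as [l Hlim]; exists l; apply left_limit_at_filterlim, Hlim).
  exists (picard_limit M x0 y0 lam f mu). split; [| split; [| split]].
  - exact (picard_limit_is_solution M x0 y0 lam f mu flo fup Bmu Hflo Hf Hmu Hr Hl Hbound Hx0).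
  - exact (solution_unique M x0 y0 lam f mu flo fup Bmu Hflo Hf Hmu Hr Hl Hbound Hx0).
  - exact (picard_limit_nonneg M x0 y0 lam f mu flo fup Bmu Hflo Hf Hmu Hlam0 Hr Hl Hbound Hx0).
  - exact (picard_limit_mass M x0 y0 lam f mu flo fup Bmu Hflo Hf Hmu Hlam0 Hr Hl Hbound Hx0 HM).
Qed.
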